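(* Let $\mathbf K$ be an abstract class. Assume: \begin{enumerate} \item $\mathrm{LS}(\mathbf K) < \infty$ and $\mathbf K$ has no models of cardinality $<\mathrm{LS}(\mathbf K)$; \item for every $\lambda \in \mathrm{dom}(\mathbf K)$, $\mathbf K$ is $[\mathrm{LS}(\mathbf K), \lambda)$-continuous; \item (coherence for models of different sizes) if $M_0, M_1, M_2 \in \mathbf K$, $M_0 \le_{\mathbf K} M_2$, $M_1 \le_{\mathbf K} M_2$, $|M_0| \subseteq |M_1|$, and $\|M_0\| < \|M_1\| < \|M_2\|$, then $M_0 \le_{\mathbf K} M_1$; \item (smoothness for big extensions) if $\langle M_i : i \le \delta\rangle$ is $\le_{\mathbf K}$-increasing continuous (with $M_\delta = \bigcup_{i<\delta}M_i \in \mathbf K$), $N \in \mathbf K$, $M_i \le_{\mathbf K} N$ for all $i<\delta$, and $\|M_\delta\| < \|N\|$, then $M_\delta \le_{\mathbf K} N$; \item (resolvability for successors) if $\lambda \ge \mathrm{LS}(\mathbf K)$, $M \le_{\mathbf K} N$, $\|M\| = \lambda$ and $\|N\| = \lambda^+$, then there is an increasing continuous chain $\langle M_i : i<\lambda^+\rangle$ of models of cardinality $\lambda$ with $M_0 = M$ and $\bigcup_{i<\lambda^+} M_i = N$. \end{enumerate} Then $\mathbf K$ is resolvable.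
   Context: An abstract class $\mathbf K=(K,\le_{\mathbf K})$ is a class of structures in a fixed vocabulary $\tau(\mathbf K)$, closed under isomorphism, with a partial order extending substructure and invariant under isomorphism. $\mathrm{LS}(\mathbf K)$ is the least $\lambda\ge|\tau(\mathbf K)|+\aleph_0$ such that every $A\subseteq|M|$, $M\in\mathbf K$, is contained in some $M_0\le_{\mathbf K} M$ with $\|M_0\|\le|A|+\lambda$ ($\infty$ if none exists). $\mathrm{dom}(\mathbf K)$ is the class of cardinals $\lambda$ with a model of cardinality $\lambda$. $\mathbf K$ is $[\lambda_1,\lambda_2)$-continuous if for every limit $\delta$ and every $\le_{\mathbf K}$-increasing chain $\langle M_i:i<\delta\rangle$ of models with cardinalities in $[\lambda_1,\lambda_2)$, $\bigcup_{i<\delta}M_i\in\mathbf K$ and $M_0\le_{\mathbf K}\bigcup_{i<\delta}M_i$. For $M_0 <_{\mathbf K} M$, $M$ is $\delta$-resolvable over $M_0$ if there is a strictly increasing continuous chain $\langle N_i : i \le\delta\rangle$ in $\mathbf K$ with $N_0 = M_0$, $N_\delta = M$ and $\|N_i\| = \|M_0\| + |i|$ for all $i\le\delta$; $M$ is resolvable over $M_0$ if it is $\delta$-resolvable over $M_0$ for some limit ordinal $\delta$; $M$ is resolvable if it is resolvable over every $M_0 \le_{\mathbf K} M$ with $\|M_0\|<\|M\|$; $\mathbf K$ is resolvable if every $M\in\mathbf K$ is resolvable. *)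

(* abstract classes, cardinals (via injections/bijections of types)
   and ordinals (via well-ordered index types). *)
From Stdlib Require Import List.
Import ListNotations.
Set Implicit Arguments.
Unset Strict Implicit.

Definition card_le (A B : Type) : Prop :=
  exists f : A -> B, forall x y, f x = f y -> x = y.
Definition card_eq (A B : Type) : Prop :=
  exists f : A -> B, (forall x y, f x = f y -> x = y) /\ (forall y, exists x, f x = y).
Definition card_lt (A B : Type) : Prop := card_le A B /\ ~ card_le B A.
Definition is_succ_card (A B : Type) : Prop :=
  card_lt A B /\ (forall C : Type, card_lt A C -> card_le B C).

Definition well_order {I : Type} (lt : I -> I -> Prop) : Prop :=
  (forall i, ~ lt i i) /\
  (forall i j k, lt i j -> lt j k -> lt i k) /\
  (forall i j, lt i j \/ i = j \/ lt j i) /\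
  well_founded lt.
Definition limit_ord {I : Type} (lt : I -> I -> Prop) : Prop :=
  inhabited I /\ (forall i, exists j, lt i j).
Definition is_limit {I : Type} (lt : I -> I -> Prop) (i : I) : Prop :=
  (exists j, lt j i) /\ (forall j, lt j i -> exists k, lt j k /\ lt k i).
Definition least {I : Type} (lt : I -> I -> Prop) (i0 : I) : Prop :=
  forall j, ~ lt j i0.
(* the initial segment {j | j < i}; its cardinality is |i| *)
Definition seg {I : Type} (lt : I -> I -> Prop) (i : I) : Type := { j : I | lt j i }.

Record vocab := {
  fsym : Type; rsym : Type;
  farity : fsym -> nat; rarity : rsym -> nat }.

(* A tau-structure whose universe is a subset of the ambient type U.
   Values of functions / relations on arguments outside the universe are irrelevant. *)
Record structure (tau : vocab) (U : Type) := {
  sdom : U -> Prop;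
  sfun : fsym tau -> list U -> U;
  srel : rsym tau -> list U -> Prop }.
Arguments sdom {tau U}. Arguments sfun {tau U}. Arguments srel {tau U}.

Section Structures.
Context {tau : vocab} {U : Type}.

Definition dsort (M : structure tau U) : Type := { x : U | sdom M x }.

Definition args_in (M : structure tau U) (l : list U) (n : nat) : Prop :=
  length l = n /\ Forall (sdom M) l.

Definition wf_struct (M : structure tau U) : Prop :=
  forall f l, args_in M l (farity f) -> sdom M (sfun M f l).

Definition substructure (M N : structure tau U) : Prop :=
  (forall x, sdom M x -> sdom N x) /\
  (forall f l, args_in M l (farity f) -> sfun M f l = sfun N f l) /\
  (forall r l, args_in M l (rarity r) -> (srel M r l <-> srel N r l)).

Definition same_universe (M N : structure tau U) : Prop :=
  forall x, sdom M x <-> sdom N x.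

Definition iso (h : U -> U) (M N : structure tau U) : Prop :=
  (forall x, sdom M x -> sdom N (h x)) /\
  (forall x y, sdom M x -> sdom M y -> h x = h y -> x = y) /\
  (forall y, sdom N y -> exists x, sdom M x /\ h x = y) /\
  (forall f l, args_in M l (farity f) -> h (sfun M f l) = sfun N f (map h l)) /\
  (forall r l, args_in M l (rarity r) -> (srel M r l <-> srel N r (map h l))).

Definition is_union {I : Type} (P : I -> Prop) (ch : I -> structure tau U)
    (M : structure tau U) : Prop :=
  (forall x, sdom M x <-> exists j, P j /\ sdom (ch j) x) /\
  (forall j, P j -> substructure (ch j) M).
End Structures.

Record abstract_class (tau : vocab) (U : Type) := {
  K : structure tau U -> Prop;
  le : structure tau U -> structure tau U -> Prop;
  K_wf : forall M, K M -> wf_struct M;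
  K_iso : forall h M N, K M -> iso h M N -> K N;
  le_K : forall M N, le M N -> K M /\ K N;
  le_refl : forall M, K M -> le M M;
  le_trans : forall M N P, le M N -> le N P -> le M P;
  le_antisym : forall M N, le M N -> le N M -> same_universe M N;
  le_sub : forall M N, le M N -> substructure M N;
  le_iso : forall h M1 M2 N1 N2,
      iso h M1 N1 -> iso h M2 N2 -> le M1 M2 -> le N1 N2 }.
Arguments K {tau U}. Arguments le {tau U}.

Section Class.
Context {tau : vocab} {U : Type} (C : abstract_class tau U).

Definition lt_K (M N : structure tau U) : Prop := le C M N /\ ~ same_universe M N.

Definition LS_prop (lam : Type) : Prop :=
  forall M, K C M -> forall A : U -> Prop, (forall x, A x -> sdom M x) ->
    exists M0, le C M0 M /\ (forall x, A x -> sdom M0 x) /\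
               card_le (dsort M0) ({x : U | A x} + lam).

(* LS(K) = LS (in particular LS(K) < infinity) *)
Definition is_LS (LS : Type) : Prop :=
  card_le ((fsym tau + rsym tau) + nat) LS /\ LS_prop LS /\
  (forall lam : Type, card_le ((fsym tau + rsym tau) + nat) lam -> LS_prop lam ->
     card_le LS lam).

Definition incr_chain {I : Type} (lt : I -> I -> Prop) (ch : I -> structure tau U) : Prop :=
  (forall i, K C (ch i)) /\ (forall i j, lt i j -> le C (ch i) (ch j)).

Definition continuous {I : Type} (lt : I -> I -> Prop) (ch : I -> structure tau U) : Prop :=
  forall i, is_limit lt i -> is_union (fun j => lt j i) ch (ch i).

Definition resolvable_over_by {I : Type} (lt : I -> I -> Prop)
    (M0 M : structure tau U) : Prop :=
  exists ch : I -> structure tau U,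
    (forall i, K C (ch i)) /\
    (forall i j, lt i j -> lt_K (ch i) (ch j)) /\
    (forall i, lt_K (ch i) M) /\
    continuous lt ch /\
    is_union (fun _ => True) ch M /\
    (forall i0, least lt i0 -> ch i0 = M0) /\
    (forall i, card_eq (dsort (ch i)) (dsort M0 + seg lt i)) /\
    card_eq (dsort M) (dsort M0 + I).

Definition resolvable_over (M0 M : structure tau U) : Prop :=
  lt_K M0 M /\
  exists (I : Type) (lt : I -> I -> Prop),
    well_order lt /\ limit_ord lt /\ resolvable_over_by lt M0 M.

Definition resolvable_model (M : structure tau U) : Prop :=
  forall M0, le C M0 M -> card_lt (dsort M0) (dsort M) -> resolvable_over M0 M.

Definition resolvable_class : Prop :=
  forall M, K C M -> resolvable_model M.
End Class.

(* Fix a well-order [W] of [M] all of whose proper initial segments are smaller than [M].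
   By Zorn's lemma there is a maximal "resolution under construction": a well-ordered,
   continuous, strictly increasing chain of submodels of [M] starting at [M0], whose member [N]
   has size [|M0| + |predecessors of N|], and in which every successor adds the [W]-least element
   missing from its predecessor. Such a chain has no top member [T]: the LS property and
   coherence give a model of size [|T|^+] between [T] and [M] containing the element missing
   from [T], and a member of its successor resolution (assumption 5) can be put on top. Its union
   is all of [M]: otherwise the union is a model below [M] by continuity and smoothness, it is
   smaller than [M] because the elements added at successors all lie [W]-below the first missing
   element, and it could be put on top. The members of the maximal chain resolve [M] over [M0]. *)

From Pilot Require Import Defs.
From Stdlib Require Import Classical ClassicalEpsilon FunctionalExtensionality
  PropExtensionality ProofIrrelevance Cantor Wellfounded.
From mathcomp Require ssreflect ssrfun ssrbool eqtype boolp classical_sets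
  functions cardinality wochoice.

Module MathcompClassical.
Import ssreflect ssrfun ssrbool eqtype boolp wochoice.

Lemma well_order_exists (T : Type) : exists R : T -> T -> Prop,
  (forall Q : T -> Prop, (exists x, Q x) -> exists z, Q z /\ forall x, Q x -> R z x) /\
  (forall x y, R x y -> R y x -> x = y).
Proof.
elim/Peq: T => T; have [R wR] := well_ordering_principle T.
have Rrefl x : R x x.
  have xne : nonempty [pred t | t == x] by exists x; rewrite inE eqxx.
  have [z [[/[!inE]/eqP-> zmin] _]] := wR _ xne.
  by apply: zmin; rewrite inE.
exists (fun x y => R x y); split.
- move=> Q [x Qx].
  have Qne : nonempty [pred t | `[< Q t >]] by exists x; rewrite inE; apply/asboolP.
  have [z [[Qz zmin] _]] := wR _ Qne.
  exists z; split; first by move: Qz; rewrite inE => /asboolP.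
  by move=> y Qy; apply: zmin; rewrite inE; apply/asboolP.
- move=> x y Rxy Ryx.
  have xyne : nonempty [pred t | (t == x) || (t == y)] by exists x; rewrite inE eqxx.
  have [z [_ zuniq]] := wR _ xyne.
  have zx := zuniq x; have zy := zuniq y.
  rewrite -zx ?zy //; split; rewrite ?inE ?eqxx ?orbT //;
    by move=> t; rewrite inE => /orP[/eqP->|/eqP->].
Qed.

Import classical_sets functions cardinality.
Local Open Scope classical_set_scope.
Local Open Scope card_scope.

Lemma zorn (T : Type) (R : T -> T -> Prop) :
  (forall t, R t t) -> (forall r s t, R r s -> R s t -> R r t) ->
  (forall s t, R s t -> R t s -> s = t) ->
  (forall A : T -> Prop, (forall s t, A s -> A t -> R s t \/ R t s) ->
     exists t, forall s, A s -> R s t) ->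
  exists t, forall s, R t s -> s = t.
Proof.
move=> Rrefl Rtrans Ranti Rchain.
have [||||t tmax] := @Zorn T (fun a b => `[< R a b >]).
- by move=> t; apply/asboolP.
- by move=> a b c /asboolP ab /asboolP bc; apply/asboolP; exact: Rtrans ab bc.
- by move=> a b /asboolP ab /asboolP ba; exact: Ranti.
- move=> A Atot; have [|t tub] := Rchain A.
    by move=> s u As Au; case: (Atot s u As Au) => /asboolP; auto.
  by exists t => s As; apply/asboolP; exact: tub.
by exists t => s /asboolP; exact: tmax.
Qed.

Lemma card_le_setT (A B : Type) : Defs.card_le A B -> [set: A] #<= [set: B].
Proof.
move=> [f injf]; apply/card_leP.
have [g] : $|{injfun [set: A] >-> [set: B]}|.
  by apply/injfunPex; exists f => // x y _ _; exact: injf.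
by squash (sigLR g).
Qed.

Lemma card_eq_setT (A B : Type) : [set: A] #= [set: B] -> Defs.card_eq A B.
Proof.
move=> /card_bijP[f [g fK gK]].
pose inA (a : A) : [set: A] := SigSub (mem_set (I : [set: A] a)).
pose inB (b : B) : [set: B] := SigSub (mem_set (I : [set: B] b)).
exists (fun a => val (f (inA a))); split.
- by move=> a a' /val_inj/(can_inj fK) [].
- move=> b; exists (val (g (inB b))).
  have -> : inA (val (g (inB b))) = g (inB b) by apply: val_inj.
  by rewrite gK.
Qed.

Lemma card_le_antisym (A B : Type) :
  Defs.card_le A B -> Defs.card_le B A -> Defs.card_eq A B.
Proof.
by move=> /card_le_setT AB /card_le_setT BA; apply/card_eq_setT/Cantor_Bernstein.
Qed.

End MathcompClassical.
Import MathcompClassical.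

Lemma sig_eq {X} {P : X -> Prop} (a b : {x | P x}) : proj1_sig a = proj1_sig b -> a = b.
Proof. destruct a, b; simpl; intros; subst; f_equal; apply proof_irrelevance. Qed.

Lemma zorn_sets (T : Type) (P : (T -> Prop) -> Prop) :
  (forall F : (T -> Prop) -> Prop, (forall X, F X -> P X) ->
     (forall X Y, F X -> F Y -> (forall t, X t -> Y t) \/ (forall t, Y t -> X t)) ->
     P (fun t => exists X, F X /\ X t)) ->
  exists A, P A /\ forall B, (forall t, A t -> B t) -> P B -> forall t, B t -> A t.
Proof.
intros Punion.
destruct (@zorn {X | P X} (fun a b => forall t, proj1_sig a t -> proj1_sig b t))
  as [[A PA] Amax].
- auto.
- eauto.
- intros [a pa] [b pb] ab ba; apply sig_eq; simpl in *.
  apply functional_extensionality; intros t.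
  apply propositional_extensionality; split; auto.
- intros F Fchain.
  assert (PU : P (fun t => exists X, (exists x, F x /\ proj1_sig x = X) /\ X t)).
  { apply Punion.
    - intros X [x [_ <-]]; exact (proj2_sig x).
    - intros X Y [x [Fx <-]] [y [Fy <-]]; apply Fchain; auto. }
  exists (exist _ _ PU); intros s Fs t st; simpl.
  exists (proj1_sig s); split; eauto.
- exists A; split; auto.
  intros B AB PB.
  specialize (Amax (exist _ B PB) AB). injection Amax; intros ->; auto.
Qed.

(** * Cardinal arithmetic *)

Section CardinalArithmetic.
Implicit Types A B C X : Type.

Lemma card_le_refl A : card_le A A.
Proof. exists (fun x => x); auto. Qed.

Lemma card_le_trans {A B C} : card_le A B -> card_le B C -> card_le A C.
Proof. intros [f Hf] [g Hg]; exists (fun x => g (f x)); auto. Qed.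

Lemma card_eq_le {A B} : card_eq A B -> card_le A B.
Proof. intros [f [Hf _]]; exists f; auto. Qed.

Lemma card_eq_refl A : card_eq A A.
Proof. exists (fun x => x); split; eauto. Qed.

Lemma card_eq_sym {A B} : card_eq A B -> card_eq B A.
Proof.
intros [f [finj fsurj]].
set (g := fun y => proj1_sig (constructive_indefinite_description _ (fsurj y))).
assert (fg : forall y, f (g y) = y)
  by (intros y; exact (proj2_sig (constructive_indefinite_description _ (fsurj y)))).
exists g; split.
- intros y y' E; rewrite <- (fg y), <- (fg y'), E; reflexivity.
- intros x; exists (f x); apply finj, fg.
Qed.

Lemma card_eq_ge {A B} : card_eq A B -> card_le B A.
Proof. intros h; apply card_eq_le, card_eq_sym, h. Qed.

Lemma card_eq_trans {A B C} : card_eq A B -> card_eq B C -> card_eq A C.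
Proof.
intros [f [finj fsurj]] [g [ginj gsurj]]; exists (fun x => g (f x)); split; auto.
intros z; destruct (gsurj z) as [y <-]; destruct (fsurj y) as [x <-]; eauto.
Qed.

Lemma card_le_total A B : card_le A B \/ card_le B A.
Proof.
destruct (@zorn_sets (A * B) (fun G =>
    (forall a b b', G (a, b) -> G (a, b') -> b = b') /\
    (forall a a' b, G (a, b) -> G (a', b) -> a = a')))
  as [G [[Gfun Ginj] Gmax]].
- intros F HF Fchain; split.
  + intros a b b' [X [FX Xb]] [Y [FY Yb]].
    destruct (Fchain X Y FX FY) as [h|h].
    * apply (proj1 (HF Y FY) a); auto.
    * apply (proj1 (HF X FX) a); auto.
  + intros a a' b [X [FX Xb]] [Y [FY Yb]].
    destruct (Fchain X Y FX FY) as [h|h].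
    * apply (proj2 (HF Y FY) _ _ b); auto.
    * apply (proj2 (HF X FX) _ _ b); auto.
- destruct (classic (forall a, exists b, G (a, b))) as [Gtot|Gtot].
  { left. exists (fun a => proj1_sig (constructive_indefinite_description _ (Gtot a))).
    intros x y. destruct (constructive_indefinite_description _ (Gtot x)) as [bx ex].
    destruct (constructive_indefinite_description _ (Gtot y)) as [byy ey]; simpl.
    intros ->; eauto. }
  destruct (classic (forall b, exists a, G (a, b))) as [Gsurj|Gsurj].
  { right. exists (fun b => proj1_sig (constructive_indefinite_description _ (Gsurj b))).
    intros x y. destruct (constructive_indefinite_description _ (Gsurj x)) as [ax ex].
    destruct (constructive_indefinite_description _ (Gsurj y)) as [ay ey]; simpl.
    intros ->; eauto. }
  (* a pair (a0, b0) of unmatched points extends the maximal partial injection *)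
  exfalso.
  apply not_all_ex_not in Gtot; destruct Gtot as [a0 Ha0].
  apply not_all_ex_not in Gsurj; destruct Gsurj as [b0 Hb0].
  apply Ha0; exists b0.
  apply (Gmax (fun p => G p \/ p = (a0, b0))); auto; split.
  + intros a b b' [h|h] [h'|h']; try congruence; eauto;
      match goal with E : (_, _) = (_, _) |- _ => injection E; intros; subst end;
      exfalso; apply Ha0; eauto.
  + intros a a' b [h|h] [h'|h']; try congruence; eauto;
      match goal with E : (_, _) = (_, _) |- _ => injection E; intros; subst end;
      exfalso; apply Hb0; eauto.
Qed.

Lemma card_le_sum A A' B B' : card_le A A' -> card_le B B' -> card_le (A + B) (A' + B').
Proof.
intros [f Hf] [g Hg]; exists (fun x => match x with inl a => inl (f a) | inr b => inr (g b) end).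
intros [a|b] [a'|b'] E; inversion E; f_equal; auto.
Qed.

Lemma card_le_prod A A' B B' : card_le A A' -> card_le B B' -> card_le (A * B) (A' * B').
Proof.
intros [f Hf] [g Hg]; exists (fun x => (f (fst x), g (snd x))).
intros [a b] [a' b'] E; inversion E; f_equal; auto.
Qed.

Lemma card_eq_sum A A' B B' : card_eq A A' -> card_eq B B' -> card_eq (A + B) (A' + B').
Proof.
intros h1 h2; apply card_le_antisym; apply card_le_sum;
  auto using card_eq_le, card_eq_ge.
Qed.

Lemma card_eq_sum_r A B B' : card_eq B B' -> card_eq (A + B) (A + B').
Proof. intros h; apply card_eq_sum; auto using card_eq_refl. Qed.

Lemma card_le_inl A B : card_le A (A + B).
Proof. exists inl; intros x y E; inversion E; auto. Qed.

Lemma card_le_inr A B : card_le B (A + B).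
Proof. exists inr; intros x y E; inversion E; auto. Qed.

Lemma card_eq_sum_assoc A B C : card_eq ((A + B) + C) (A + (B + C)).
Proof.
exists (fun x => match x with inl (inl a) => inl a | inl (inr b) => inr (inl b)
                 | inr c => inr (inr c) end); split.
- intros [[a|b]|c] [[a'|b']|c'] E; inversion E; auto.
- intros [a|[b|c]]; [exists (inl (inl a))|exists (inl (inr b))|exists (inr c)]; auto.
Qed.

Lemma card_eq_sum_empty A B : (B -> False) -> card_eq A (A + B).
Proof.
intros h. exists inl; split; [intros a b E; injection E; auto|].
intros [a|b]; [exists a; auto|destruct (h b)].
Qed.

Lemma card_le_split X (P : X -> Prop) : card_le X ({x | P x} + {x | ~ P x}).
Proof.
exists (fun x => match excluded_middle_informative (P x) with
                 | left h => inl (exist _ x h) | right h => inr (exist _ x h) end).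
intros x y.
destruct (excluded_middle_informative (P x)); destruct (excluded_middle_informative (P y));
  intros E; inversion E; auto.
Qed.

Lemma card_le_sig X (P : X -> Prop) : card_le {x | P x} X.
Proof. exists (@proj1_sig _ _); intros a b; apply sig_eq. Qed.

Lemma card_eq_sig_ext X (P Q : X -> Prop) :
  (forall x, P x <-> Q x) -> card_eq {x | P x} {x | Q x}.
Proof.
intros h. exists (fun a => exist Q (proj1_sig a) (proj1 (h _) (proj2_sig a))). split.
- intros a b E; injection E; apply sig_eq.
- intros [b hb]; exists (exist P b (proj2 (h _) hb)); apply sig_eq; reflexivity.
Qed.

Lemma card_lt_le_trans {A B C} : card_lt A B -> card_le B C -> card_lt A C.
Proof.
intros [h1 h2] h3; split; [eapply card_le_trans; eauto|].
intros h4; apply h2; eapply card_le_trans; eauto.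
Qed.

Lemma card_le_lt_trans {A B C} : card_le A B -> card_lt B C -> card_lt A C.
Proof.
intros h1 [h2 h3]; split; [eapply card_le_trans; eauto|].
intros h4; apply h3; eapply card_le_trans; eauto.
Qed.

Lemma card_not_lt {A B} : ~ card_lt A B -> card_le B A.
Proof.
intros h. destruct (card_le_total B A) as [h'|h']; auto.
apply NNPP; intros h''; apply h; split; auto.
Qed.

Lemma is_succ_card_eq {A B B'} : is_succ_card A B -> card_eq B B' -> is_succ_card A B'.
Proof.
intros [[AB BA] Bleast] E; split; [split|].
- eapply card_le_trans; [exact AB|apply card_eq_le, E].
- intros h; apply BA; eapply card_le_trans; [apply card_eq_le, E|exact h].
- intros D AD; eapply card_le_trans; [apply card_eq_ge, E|apply Bleast, AD].
Qed.

Lemma card_le_union X (P Q : X -> Prop) : card_le {x | P x \/ Q x} ({x | P x} + {x | Q x}).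
Proof.
exists (fun x => match excluded_middle_informative (P (proj1_sig x)) with
         | left h => inl (exist P _ h)
         | right h => inr (exist Q (proj1_sig x)
               (match proj2_sig x with or_introl h' => False_ind _ (h h') | or_intror h' => h' end))
         end).
intros [x hx] [y hy]; simpl.
destruct (excluded_middle_informative (P x)); destruct (excluded_middle_informative (P y));
  intros E; inversion E; apply sig_eq; auto.
Qed.

Lemma card_le_sig_sub X (P Q : X -> Prop) :
  (forall x, P x -> Q x) -> card_le {x | P x} {x | Q x}.
Proof.
intros h. exists (fun a => exist Q (proj1_sig a) (h _ (proj2_sig a))).
intros a b E; injection E; apply sig_eq.
Qed.

Lemma card_le_singleton X (x : X) : card_le {y | y = x} unit.
Proof. exists (fun _ => tt); intros [a ha] [b hb] _; apply sig_eq; simpl; congruence. Qed.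

Lemma card_eq_sig_sig X (D : X -> Prop) (P : {x | D x} -> Prop) :
  card_eq {d : {x | D x} | P d} {x | exists h : D x, P (exist _ x h)}.
Proof.
unshelve eexists (fun d => exist _ (proj1_sig (proj1_sig d)) _); [|split].
- destruct d as [[x h] p]; exists h; exact p.
- intros d d' E; injection E as E; apply sig_eq, sig_eq, E.
- intros [x [h p]]; exists (exist _ (exist _ x h) p); apply sig_eq; reflexivity.
Qed.

Lemma card_le_sigT A (B : A -> Type) Z :
  (forall a, card_le (B a) Z) -> card_le {a : A & B a} (A * Z).
Proof.
intros hB.
set (f := fun a => proj1_sig (constructive_indefinite_description _ (hB a))).
assert (f_inj : forall a b b', f a b = f a b' -> b = b')
  by (intros a; exact (proj2_sig (constructive_indefinite_description _ (hB a)))).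
exists (fun p => (projT1 p, f (projT1 p) (projT2 p))).
intros [a b] [a' b'] E; simpl in E. injection E as -> E.
apply f_inj in E; subst; reflexivity.
Qed.

End CardinalArithmetic.

(** * Hessenberg's theorem *)

Definition infinite (X : Type) := card_le nat X.

Lemma infinite_le A B : infinite A -> card_le A B -> infinite B.
Proof. intros; eapply card_le_trans; eauto. Qed.

Lemma infinite_sum_le_prod X : infinite X -> card_le (X + X) (X * X).
Proof.
intros [e He].
exists (fun x => match x with inl a => (a, e 0) | inr a => (a, e 1) end).
intros [a|a] [b|b] E; inversion E; auto;
  exfalso; match goal with H : e _ = e _ |- _ => apply He in H; discriminate end.
Qed.

(* A maximal pairing graph extending the Cantor pairing on [e(nat)] has a range [S] with
   [|S * S| = |S|], and by maximality [|X \ S| <= |S|]. *)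
Section Hessenberg.
Variables (X : Type) (e : nat -> X).
Hypothesis e_inj : forall m n, e m = e n -> m = n.

Definition graph_range (G : (X * X) * X -> Prop) x := exists p, G (p, x).

(* [G] is the graph of a bijection from [graph_range G]^2 onto [graph_range G]. *)
Definition pairing_graph (G : (X * X) * X -> Prop) :=
  (forall p y z, G (p, y) -> G (p, z) -> y = z) /\
  (forall p q y, G (p, y) -> G (q, y) -> p = q) /\
  (forall p, (exists y, G (p, y)) <-> (graph_range G (fst p) /\ graph_range G (snd p))).

Definition cantor_graph (t : (X * X) * X) : Prop :=
  exists m n, t = ((e m, e n), e (to_nat (m, n))).

Lemma cantor_graph_range m : graph_range cantor_graph (e m).
Proof.
exists (e (fst (of_nat m)), e (snd (of_nat m))), (fst (of_nat m)), (snd (of_nat m)).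
rewrite <- surjective_pairing, cancel_to_of; reflexivity.
Qed.

Lemma cantor_pairing_graph : pairing_graph cantor_graph.
Proof.
split; [|split].
- intros p y z [m [n E1]] [m' [n' E2]]. injection E1 as Ep Ey. injection E2 as Ep' Ez.
  subst. injection Ep' as E3 E4. apply e_inj in E3; apply e_inj in E4; subst; reflexivity.
- intros p q y [m [n E1]] [m' [n' E2]]. injection E1 as Ep Ey. injection E2 as Ep' Ez.
  subst. injection (to_nat_inj (m, n) (m', n') (e_inj _ _ Ez)) as -> ->; reflexivity.
- intros [a b]; simpl; split.
  + intros [y [m [n E]]]. injection E as Ea Eb Ey; subst.
    split; apply cantor_graph_range.
  + intros [[p1 [m1 [n1 E1]]] [p2 [m2 [n2 E2]]]].
    injection E1 as _ Ea. injection E2 as _ Eb. subst.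
    eexists; exists (to_nat (m1, n1)), (to_nat (m2, n2)); reflexivity.
Qed.

(* The empty graph is allowed so that the union of an empty chain is admissible. *)
Definition admissible_graph G :=
  pairing_graph G /\ ((forall t, cantor_graph t -> G t) \/ (forall t, ~ G t)).

Lemma admissible_graph_union (F : ((X * X) * X -> Prop) -> Prop) :
  (forall G, F G -> admissible_graph G) ->
  (forall G H, F G -> F H -> (forall t, G t -> H t) \/ (forall t, H t -> G t)) ->
  admissible_graph (fun t => exists G, F G /\ G t).
Proof.
intros HF Fchain.
assert (pg : forall G, F G -> pairing_graph G) by (intros G FG; exact (proj1 (HF G FG))).
split; [split; [|split]|].
- intros p y z [G1 [F1 h1]] [G2 [F2 h2]].
  destruct (Fchain _ _ F1 F2) as [s|s].
  + apply (proj1 (pg _ F2) p); auto.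
  + apply (proj1 (pg _ F1) p); auto.
- intros p q y [G1 [F1 h1]] [G2 [F2 h2]].
  destruct (Fchain _ _ F1 F2) as [s|s].
  + apply (proj1 (proj2 (pg _ F2)) p q y); auto.
  + apply (proj1 (proj2 (pg _ F1)) p q y); auto.
- intros p; split.
  + intros [y [G1 [F1 h1]]].
    destruct (proj1 (proj2 (proj2 (pg _ F1)) p) (ex_intro _ y h1)) as [[q1 r1] [q2 r2]].
    split; [exists q1|exists q2]; exists G1; auto.
  + intros [[q1 [G1 [F1 h1]]] [q2 [G2 [F2 h2]]]].
    destruct (Fchain _ _ F1 F2) as [s|s].
    * destruct (proj2 (proj2 (proj2 (pg _ F2)) p)) as [y hy].
      { split; [exists q1|exists q2]; auto. }
      exists y, G2; auto.
    * destruct (proj2 (proj2 (proj2 (pg _ F1)) p)) as [y hy].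
      { split; [exists q1|exists q2]; auto. }
      exists y, G1; auto.
- destruct (classic (exists G, F G /\ forall t, cantor_graph t -> G t)) as [[G [FG HG]]|N].
  + left; intros t h; exists G; auto.
  + right; intros t [G [FG h]].
    destruct (proj2 (HF _ FG)) as [h'|h']; [apply N; eauto|eapply h'; eauto].
Qed.

Section Range.
Variable A : (X * X) * X -> Prop.
Hypothesis A_pairing : pairing_graph A.
Hypothesis A_cantor : forall t, cantor_graph t -> A t.
Let S := graph_range A.
Let Sx := {x | S x}.

Lemma pairing_graph_dom p y : A (p, y) -> S (fst p) /\ S (snd p).
Proof. intros h; apply (proj1 (proj2 (proj2 A_pairing) p)); eauto. Qed.

Lemma range_infinite : infinite Sx.
Proof.
assert (Se : forall n, S (e n)).
{ intros n; destruct (cantor_graph_range n) as [p hp]; exists p; auto. }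
exists (fun n => exist S (e n) (Se n)); intros m n E; apply e_inj; injection E; auto.
Qed.

Lemma range_square_card : card_eq (Sx * Sx) Sx.
Proof.
destruct A_pairing as [Afun [Ainj Adom]].
assert (Hd : forall q : Sx * Sx, exists y, A ((proj1_sig (fst q), proj1_sig (snd q)), y)).
{ intros [[a ha] [b hb]]; apply (proj2 (Adom (a, b))); simpl; auto. }
set (img := fun q => proj1_sig (constructive_indefinite_description _ (Hd q))).
assert (Himg : forall q, A ((proj1_sig (fst q), proj1_sig (snd q)), img q))
  by (intros q; exact (proj2_sig (constructive_indefinite_description _ (Hd q)))).
exists (fun q => exist S (img q) (ex_intro _ _ (Himg q))); split.
- intros q q' E. injection E as E.
  assert (h' := Himg q'); rewrite <- E in h'.
  pose proof (Ainj _ _ _ (Himg q) h') as Eq.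
  destruct q as [[a ha] [b hb]], q' as [[a' ha'] [b' hb']]; simpl in Eq.
  injection Eq as -> ->; f_equal; apply sig_eq; reflexivity.
- intros [x [p hp]]. destruct (pairing_graph_dom _ _ hp) as [h1 h2].
  exists (exist S (fst p) h1, exist S (snd p) h2). apply sig_eq; simpl.
  pose proof (Himg (exist S (fst p) h1, exist S (snd p) h2)) as h; simpl in h.
  rewrite <- surjective_pairing in h. eapply Afun; eauto.
Qed.

Lemma range_sum_le T : card_le T Sx -> card_le (Sx + T) Sx.
Proof.
intros h. eapply card_le_trans; [apply card_le_sum; [apply card_le_refl|exact h]|].
eapply card_le_trans; [apply infinite_sum_le_prod, range_infinite|].
apply card_eq_le, range_square_card.
Qed.

Lemma range_square_le T : card_le T Sx -> card_le (T * T) Sx.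
Proof.
intros h; eapply card_le_trans; [apply card_le_prod; exact h|apply card_eq_le, range_square_card].
Qed.

Section Extension.
Variable B : X -> Prop.
Hypothesis B_outside : forall x, B x -> ~ S x.
Hypothesis B_card : card_eq {x | B x} Sx.

Definition new_pairs :=
  {p : X * X | (S (fst p) \/ B (fst p)) /\ (S (snd p) \/ B (snd p)) /\ ~ (S (fst p) /\ S (snd p))}.

Lemma new_pairs_card : card_eq new_pairs {x | B x}.
Proof.
set (S' := fun x => S x \/ B x).
assert (S'S : card_le {x | S' x} Sx).
{ eapply card_le_trans; [apply card_le_union|apply range_sum_le, card_eq_le, B_card]. }
apply card_le_antisym.
- eapply card_le_trans; [|apply (card_eq_ge B_card)].
  eapply card_le_trans; [|apply (range_square_le _ S'S)].
  exists (fun d : new_pairs => (exist S' (fst (proj1_sig d)) (proj1 (proj2_sig d)),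
                           exist S' (snd (proj1_sig d)) (proj1 (proj2 (proj2_sig d))))).
  intros [[a b] h] [[a' b'] h'] E; simpl in E. injection E as E1 E2.
  apply sig_eq; simpl; congruence.
- unshelve eexists (fun b => exist _ (proj1_sig b, proj1_sig b) _).
  + simpl. split; [right; exact (proj2_sig b)|split; [right; exact (proj2_sig b)|]].
    intros [h _]. exact (B_outside _ (proj2_sig b) h).
  + intros b b' E. injection E as E. apply sig_eq; auto.
Qed.

(* The new pairs are sent bijectively onto [B]. *)
Lemma pairing_graph_extend :
  exists A', pairing_graph A' /\ (forall t, A t -> A' t) /\ (forall x, B x -> graph_range A' x).
Proof.
destruct A_pairing as [Afun [Ainj Adom]].
destruct new_pairs_card as [phi [phi_inj phi_surj]].
set (A' := fun t => A t \/ exists d : new_pairs, t = (proj1_sig d, proj1_sig (phi d))).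
assert (rangeA' : forall x, graph_range A' x <-> S x \/ B x).
{ intros x; split.
  - intros [p [h|[d E]]]; [left; exists p; auto|].
    injection E as _ ->. right; exact (proj2_sig (phi d)).
  - intros [[p h]|h]; [exists p; left; auto|].
    destruct (phi_surj (exist B x h)) as [d hd]. exists (proj1_sig d); right; exists d.
    rewrite hd; reflexivity. }
exists A'; split; [split; [|split]|split; [intros t h; left; exact h|]].
- intros p y z [h|[d E]] [h'|[d' E']].
  + eapply Afun; eauto.
  + injection E' as -> ->. exfalso. apply (proj2 (proj2 (proj2_sig d'))).
    eapply pairing_graph_dom; eauto.
  + injection E as -> ->. exfalso. apply (proj2 (proj2 (proj2_sig d))).
    eapply pairing_graph_dom; eauto.
  + injection E as -> ->. injection E' as E1 ->. apply sig_eq in E1. subst; auto.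
- intros p q y [h|[d E]] [h'|[d' E']].
  + eapply Ainj; eauto.
  + injection E' as -> ->. exfalso. apply (B_outside _ (proj2_sig (phi d'))). exists p; auto.
  + injection E as -> ->. exfalso. apply (B_outside _ (proj2_sig (phi d))). exists q; auto.
  + injection E as -> E1. injection E' as -> E2. rewrite E2 in E1.
    apply sig_eq, phi_inj in E1. subst; auto.
- intros p. rewrite (rangeA' (fst p)), (rangeA' (snd p)). split.
  + intros [y [h|[d E]]].
    * destruct (pairing_graph_dom _ _ h); split; left; auto.
    * injection E as -> _. exact (conj (proj1 (proj2_sig d)) (proj1 (proj2 (proj2_sig d)))).
  + intros [h1 h2]. destruct (classic (S (fst p) /\ S (snd p))) as [hs|hs].
    * destruct (proj2 (Adom p)) as [y hy]; [exact hs|exists y; left; auto].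
    * exists (proj1_sig (phi (exist _ p (conj h1 (conj h2 hs))))). right.
      exists (exist _ p (conj h1 (conj h2 hs))); reflexivity.
- intros x hx; apply rangeA'; right; exact hx.
Qed.

End Extension.

Lemma complement_le_range :
  (forall A', admissible_graph A' -> (forall t, A t -> A' t) -> forall t, A' t -> A t) ->
  card_le {x | ~ S x} Sx.
Proof.
intros Amax.
destruct (card_le_total {x | ~ S x} Sx) as [h|[j j_inj]]; auto. exfalso.
set (B := fun x => exists s, proj1_sig (j s) = x).
assert (BnS : forall x, B x -> ~ S x) by (intros x [s <-]; exact (proj2_sig (j s))).
assert (BS : card_eq {x | B x} Sx).
{ apply card_le_antisym.
  - exists (fun b : {x | B x} => proj1_sig (constructive_indefinite_description _ (proj2_sig b))).
    intros [b hb] [b' hb']; simpl.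
    destruct (constructive_indefinite_description _ hb) as [s hs].
    destruct (constructive_indefinite_description _ hb') as [s' hs']; simpl.
    intros ->; apply sig_eq; simpl; congruence.
  - exists (fun s => exist B (proj1_sig (j s)) (ex_intro _ s eq_refl)).
    intros s s' E; injection E as E. apply j_inj, sig_eq, E. }
destruct (pairing_graph_extend B BnS BS) as [A' [A'pair [AA' rangeA']]].
destruct range_infinite as [n _].
destruct (rangeA' _ (ex_intro _ (n 0) eq_refl)) as [p hp].
apply (BnS (proj1_sig (j (n 0)))); [exists (n 0); reflexivity|].
exists p; apply (Amax A'); auto. split; [exact A'pair|left; auto].
Qed.

End Range.

Lemma card_square_eq_of_nat : card_eq (X * X) X.
Proof.
destruct (@zorn_sets _ admissible_graph admissible_graph_union)
  as [A [[A_pairing A0] Amax]].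
assert (A_cantor : forall t, cantor_graph t -> A t).
{ destruct A0 as [h|h]; auto.
  apply Amax; [intros t ht; exfalso; eapply h; eauto|].
  split; [apply cantor_pairing_graph|left; auto]. }
set (Sx := {x | graph_range A x}).
assert (XS : card_eq X Sx).
{ apply card_le_antisym; [|apply card_le_sig].
  eapply card_le_trans; [apply card_le_split with (P := graph_range A)|].
  apply range_sum_le; auto. apply complement_le_range; auto.
  intros A' h1 h2; apply Amax; auto. }
eapply card_eq_trans; [|apply card_eq_sym, XS].
eapply card_eq_trans; [|apply (range_square_card A A_pairing)].
destruct XS as [f [finj fsurj]].
exists (fun q => (f (fst q), f (snd q))). split.
- intros [a b] [a' b'] E; injection E as E1 E2; simpl in *; f_equal; auto.
- intros [a b]; destruct (fsurj a) as [x <-]; destruct (fsurj b) as [y <-].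
  exists (x, y); reflexivity.
Qed.

End Hessenberg.

Lemma infinite_square_eq X : infinite X -> card_eq (X * X) X.
Proof. intros [e e_inj]; exact (card_square_eq_of_nat X e e_inj). Qed.

Lemma card_le_sum_infinite Z A B :
  infinite Z -> card_le A Z -> card_le B Z -> card_le (A + B) Z.
Proof.
intros iZ hA hB. eapply card_le_trans; [apply card_le_sum; eauto|].
eapply card_le_trans; [apply infinite_sum_le_prod, iZ|apply card_eq_le, infinite_square_eq, iZ].
Qed.

Lemma card_le_prod_infinite Z A B :
  infinite Z -> card_le A Z -> card_le B Z -> card_le (A * B) Z.
Proof.
intros iZ hA hB. eapply card_le_trans; [apply card_le_prod; eauto|].
apply card_eq_le, infinite_square_eq, iZ.
Qed.

Lemma infinite_unit_le Z : infinite Z -> card_le unit Z.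
Proof. intros [e He]; exists (fun _ => e 0); intros [] []; auto. Qed.

Lemma card_eq_sum_unit_infinite Z : infinite Z -> card_eq (Z + unit) Z.
Proof.
intros iZ; apply card_le_antisym; [|apply card_le_inl].
apply card_le_sum_infinite; auto using card_le_refl, infinite_unit_le.
Qed.

Lemma card_lt_sum_infinite Z A B :
  card_lt A Z -> card_lt B Z -> infinite A -> card_lt (A + B) Z.
Proof.
intros hA hB iA. destruct (card_le_total A B) as [h|h].
- eapply card_le_lt_trans; [|exact hB].
  apply card_le_sum_infinite; auto using card_le_refl. eapply infinite_le; eauto.
- eapply card_le_lt_trans; [|exact hA]. apply card_le_sum_infinite; auto using card_le_refl.
Qed.

(** * Well-orders and successor cardinals *)

Lemma well_founded_min {X} (R : X -> X -> Prop) (P : X -> Prop) :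
  well_founded R -> (exists x, P x) -> exists m, P m /\ forall y, P y -> ~ R y m.
Proof.
intros wf [x px]. apply NNPP; intros nomin.
assert (Pfree : forall y, Acc R y -> ~ P y).
{ intros y a. induction a as [y _ IH]. intros py. apply nomin. exists y; split; auto.
  intros z pz rz. apply (IH z rz pz). }
exact (Pfree x (wf x) px).
Qed.

Lemma well_order_min {X} {R : X -> X -> Prop} (i : X) :
  well_order R -> exists i0, least R i0.
Proof.
intros [_ [_ [_ wf]]].
destruct (well_founded_min R (fun _ => True) wf (ex_intro _ i I)) as [i0 [_ h]].
exists i0; intros j l; exact (h j I l).
Qed.

Lemma well_order_type_exists (Y : Type) : exists W : Y -> Y -> Prop, well_order W.
Proof.
destruct (well_order_exists Y) as [R [Rmin Ranti]].
assert (Rtot : forall a b, R a b \/ R b a).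
{ intros a b. destruct (Rmin (fun x => x = a \/ x = b)) as [z [[->| ->] hz]]; eauto. }
exists (fun a b => R a b /\ a <> b); split; [|split; [|split]].
- intros y [_ h]; auto.
- intros a b c [h1 n1] [h2 n2]. split.
  + destruct (Rmin (fun x => x = a \/ x = b \/ x = c)) as [z [hz hmin]]; eauto.
    destruct hz as [-> | [-> | ->]].
    * apply hmin; auto.
    * exfalso; apply n1, Ranti; auto.
    * exfalso; apply n2, Ranti; auto.
  + intros ->. apply n1, Ranti; auto.
- intros a b. destruct (classic (a = b)); auto.
  destruct (Rtot a b); [left|right; right]; split; auto.
- intros a; apply NNPP; intros na.
  destruct (Rmin (fun x => ~ Acc (fun a b => R a b /\ a <> b) x)) as [z [nz zmin]]; [eauto|].
  apply nz; constructor; intros y [Ryz nyz]; apply NNPP; intros ny.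
  apply nyz, Ranti; auto.
Qed.

Lemma well_order_sig I (lt : I -> I -> Prop) (P : I -> Prop) :
  well_order lt -> well_order (fun a b : {i | P i} => lt (proj1_sig a) (proj1_sig b)).
Proof.
intros [irr [tr [tot wf]]]; split; [|split; [|split]].
- intros a; apply irr.
- intros a b c; apply tr.
- intros a b. destruct (tot (proj1_sig a) (proj1_sig b)) as [h|[h|h]]; auto.
  right; left; apply sig_eq, h.
- apply (wf_inverse_image _ _ lt (fun a => proj1_sig a) wf).
Qed.

Lemma well_order_tail I (lt : I -> I -> Prop) (i : I) :
  well_order lt -> (forall j, exists k, lt j k) ->
  let J := {j | i = j \/ lt i j} in
  well_order (fun a b : J => lt (proj1_sig a) (proj1_sig b)) /\
  limit_ord (fun a b : J => lt (proj1_sig a) (proj1_sig b)) /\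
  least (fun a b : J => lt (proj1_sig a) (proj1_sig b))
    (exist (fun j => i = j \/ lt i j) i (or_introl eq_refl)).
Proof.
intros wo nomax J. destruct wo as [irr [tr [tot wf]]].
split; [apply well_order_sig; exact (conj irr (conj tr (conj tot wf)))|split; [split|]].
- exact (inhabits (exist _ i (or_introl eq_refl))).
- intros [j hj]. destruct (nomax j) as [k hk].
  exists (exist _ k (or_intror (match hj with or_introl e => eq_ind_r (fun z => lt z k) hk e
                                  | or_intror h => tr _ _ _ h hk end))). exact hk.
- intros [j [<-|hj]] l; simpl in l; [exact (irr _ l)|exact (irr i (tr _ _ _ hj l))].
Qed.

(* Transport a well-order of [Y] along a bijection with its shortest segment of size [|Y|]. *)
Lemma initial_well_order (Y : Type) :
  exists W : Y -> Y -> Prop, well_order W /\ forall z, card_lt (seg W z) Y.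
Proof.
destruct (well_order_type_exists Y) as [W0 W0wo]. destruct W0wo as [W1 [W2 [W3 W4]]].
destruct (classic (exists z, ~ card_lt (seg W0 z) Y)) as [hz|hz].
- destruct (well_founded_min W0 _ W4 hz) as [y1 [h1 hmin]].
  assert (E : card_eq Y (seg W0 y1))
    by (apply card_le_antisym; [apply card_not_lt; auto|apply card_le_sig]).
  destruct E as [phi [phi_inj phi_surj]].
  set (W := fun a b => W0 (proj1_sig (phi a)) (proj1_sig (phi b))).
  exists W; split; [split; [|split; [|split]]|].
  + intros y; apply W1.
  + intros a b c; apply W2.
  + intros a b. destruct (W3 (proj1_sig (phi a)) (proj1_sig (phi b))) as [h|[h|h]]; auto.
    right; left; apply phi_inj, sig_eq, h.
  + apply (wf_inverse_image _ _ W0 (fun a => proj1_sig (phi a)) W4).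
  + intros z.
    assert (hz' : card_lt (seg W0 (proj1_sig (phi z))) Y).
    { apply NNPP; intros n. apply (hmin _ n). exact (proj2_sig (phi z)). }
    eapply card_le_lt_trans; [|exact hz'].
    exists (fun y : seg W z =>
      exist (fun x => W0 x (proj1_sig (phi z))) (proj1_sig (phi (proj1_sig y))) (proj2_sig y)).
    intros [a ha] [b hb] E. injection E as E. apply sig_eq; simpl. apply phi_inj, sig_eq, E.
- exists W0; split; [split; auto|].
  intros z; apply NNPP; intros n; apply hz; eauto.
Qed.

(* If every point of [P] lies below or at some [j c], [P] injects into [C * (T + unit)]. *)
Lemma card_le_of_cofinal Y C T (W : Y -> Y -> Prop) (P : Y -> Prop) (j : C -> Y) :
  (forall a b, W a b \/ a = b \/ W b a) -> infinite C -> card_le T C ->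
  (forall c, card_le (seg W (j c)) T) -> (forall z, P z -> exists c, ~ W (j c) z) ->
  card_le {y | P y} C.
Proof.
intros Wtot iC TC segT cofinal.
set (g := fun c => proj1_sig (constructive_indefinite_description _ (segT c))).
assert (g_inj : forall c a b, g c a = g c b -> a = b)
  by (intros c; exact (proj2_sig (constructive_indefinite_description _ (segT c)))).
assert (cof : forall z : {y | P y}, exists c, ~ W (j c) (proj1_sig z))
  by (intros [z pz]; exact (cofinal z pz)).
set (cz := fun z => proj1_sig (constructive_indefinite_description _ (cof z))).
assert (Hcz : forall z, ~ W (j (cz z)) (proj1_sig z))
  by (intros z; exact (proj2_sig (constructive_indefinite_description _ (cof z)))).
assert (at_top : forall z, ~ W (proj1_sig z) (j (cz z)) -> proj1_sig z = j (cz z)).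
{ intros z nw. destruct (Wtot (proj1_sig z) (j (cz z))) as [h|[h|h]]; auto.
  - contradiction.
  - exfalso; exact (Hcz z h). }
apply (@card_le_trans _ (C * (T + unit))%type).
- exists (fun z => (cz z,
     match excluded_middle_informative (W (proj1_sig z) (j (cz z))) with
     | left w => inl (g (cz z) (exist _ (proj1_sig z) w))
     | right _ => inr tt end)).
  intros z1 z2 E. injection E as E1 E2.
  destruct (excluded_middle_informative (W (proj1_sig z1) (j (cz z1)))) as [w1|w1];
  destruct (excluded_middle_informative (W (proj1_sig z2) (j (cz z2)))) as [w2|w2];
  try discriminate.
  + injection E2 as E2. revert w2 E2. rewrite <- E1. intros w2 E2.
    apply g_inj in E2. injection E2 as E2. apply sig_eq, E2.
  + apply sig_eq; rewrite (at_top z1 w1), (at_top z2 w2), E1; reflexivity.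
- apply card_le_prod_infinite; auto using card_le_refl.
  apply card_le_sum_infinite; auto using infinite_unit_le.
Qed.

Lemma is_succ_card_of_segments Y T (W : Y -> Y -> Prop) (P : Y -> Prop) :
  well_order W -> infinite T -> card_lt T {y | P y} ->
  (forall y, P y -> card_le (seg W y) T) -> is_succ_card T {y | P y}.
Proof.
intros [_ [_ [Wtot _]]] iT TP segT. split; auto.
intros C TC. apply NNPP; intros nPC.
destruct (card_le_total {y | P y} C) as [h|[j j_inj]]; [contradiction|].
destruct (classic (exists z, P z /\ forall c, W (proj1_sig (j c)) z)) as [[z [pz hb]]|nb].
- apply (proj2 TC). eapply card_le_trans; [|apply (segT z pz)].
  exists (fun c => exist (fun y => W y z) (proj1_sig (j c)) (hb c)).
  intros c c' E; injection E as E; apply j_inj, sig_eq, E.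
- apply nPC, (card_le_of_cofinal Y C T W P (fun c => proj1_sig (j c))); auto.
  + eapply infinite_le; [exact iT|exact (proj1 TC)].
  + exact (proj1 TC).
  + intros c; apply segT, (proj2_sig (j c)).
  + intros z pz. apply NNPP; intros n; apply nb. exists z; split; auto.
    intros c; apply NNPP; intros n'; apply n; eauto.
Qed.

Lemma succ_card_exists Y T :
  infinite T -> card_lt T Y -> exists P : Y -> Prop, is_succ_card T {y | P y}.
Proof.
intros iT TY. destruct (well_order_type_exists Y) as [W Wwo].
destruct (classic (exists z, card_lt T (seg W z))) as [hz|hz].
- destruct (well_founded_min W _ (proj2 (proj2 (proj2 Wwo))) hz) as [z0 [h0 hmin]].
  exists (fun y => W y z0). apply is_succ_card_of_segments with (W := W); auto.
  intros y hy. apply card_not_lt. intros h. apply (hmin y h hy).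
- exists (fun _ => True). apply is_succ_card_of_segments with (W := W); auto.
  + eapply card_lt_le_trans; [exact TY|].
    exists (fun y => exist (fun _ => True) y I). intros a b E; injection E; auto.
  + intros y _. apply card_not_lt. intros h; apply hz; eauto.
Qed.

(** * Abstract classes *)

Section AbstractClass.
Context {tau : vocab} {U : Type} {C : abstract_class tau U}.
Implicit Types M N P : structure tau U.

Lemma le_dom {M N} : le C M N -> forall x, sdom M x -> sdom N x.
Proof. intros h; exact (proj1 (le_sub h)). Qed.

Lemma le_K_l {M N} : le C M N -> K C M.
Proof. intros h; exact (proj1 (le_K h)). Qed.

Lemma le_K_r {M N} : le C M N -> K C N.
Proof. intros h; exact (proj2 (le_K h)). Qed.

Lemma same_universe_card_eq {M N} : same_universe M N -> card_eq (dsort M) (dsort N).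
Proof. intros h; apply card_le_antisym; apply card_le_sig_sub; intros x; apply h. Qed.

Lemma card_lt_not_same_universe {M N} : card_lt (dsort M) (dsort N) -> ~ same_universe M N.
Proof. intros [_ h] s. apply h, card_eq_ge, same_universe_card_eq, s. Qed.

Lemma exists_new_element {M N} : (forall x, sdom M x -> sdom N x) ->
  ~ same_universe M N -> exists x, sdom N x /\ ~ sdom M x.
Proof.
intros h n. apply NNPP; intros n'; apply n; intros x; split; auto.
intros hx; apply NNPP; intros hx'; apply n'; eauto.
Qed.

Lemma ltK_le {M N} : lt_K C M N -> le C M N.
Proof. intros h; exact (proj1 h). Qed.

Lemma ltK_le_trans {M N P} : lt_K C M N -> le C N P -> lt_K C M P.
Proof.
intros [h1 n1] h2; split; [eapply le_trans; eauto|].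
intros s; apply n1; intros x; split; [apply le_dom; auto|].
intros hb; apply s, (le_dom h2 _ hb).
Qed.

Lemma ltK_trans {M N P} : lt_K C M N -> lt_K C N P -> lt_K C M P.
Proof. intros h1 h2; apply (ltK_le_trans h1 (proj1 h2)). Qed.

Lemma ltK_irrefl M : ~ lt_K C M M.
Proof. intros [_ n]; apply n; intros x; tauto. Qed.

Lemma ltK_not_ge {M N} : lt_K C M N -> ~ le C N M.
Proof. intros [h n] h'; apply n; exact (le_antisym h h'). Qed.

Lemma chain_unbounded_of_card {I} {lt : I -> I -> Prop} {ch : I -> structure tau U} {N} {T : Type} :
  well_order lt -> incr_chain C lt ch -> is_union (fun _ => True) ch N ->
  (forall j, card_eq (dsort (ch j)) T) -> card_lt T (dsort N) -> forall j, exists k, lt j k.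
Proof.
intros [_ [_ [tot _]]] chain chunion chsize TN j. apply NNPP; intros nk. apply (proj2 TN).
eapply card_le_trans; [|apply card_eq_le, (chsize j)].
apply card_le_sig_sub. intros y hy. destruct (proj1 (proj1 chunion y) hy) as [k [_ hk]].
destruct (tot j k) as [l|[<-|l]]; [exfalso; apply nk; eauto|exact hk|].
apply (le_dom (proj2 chain _ _ l)), hk.
Qed.

End AbstractClass.

(** * Resolvability *)

Section Resolvability.
Variables (tau : vocab) (U : Type) (C : abstract_class tau U) (LS : Type).
Hypothesis LS_spec : is_LS C LS.
Hypothesis no_small_models : forall M, K C M -> ~ card_lt (dsort M) LS.
Hypothesis continuity : forall Mlam, K C Mlam ->
  forall (I : Type) (lt : I -> I -> Prop) (ch : I -> structure tau U),
    well_order lt -> limit_ord lt -> incr_chain C lt ch ->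
    (forall i, card_le LS (dsort (ch i)) /\ card_lt (dsort (ch i)) (dsort Mlam)) ->
    forall N, is_union (fun _ => True) ch N ->
      K C N /\ (forall i0, least lt i0 -> le C (ch i0) N).
Hypothesis coherence : forall M0 M1 M2, K C M0 -> K C M1 -> K C M2 ->
  le C M0 M2 -> le C M1 M2 -> (forall x, sdom M0 x -> sdom M1 x) ->
  card_lt (dsort M0) (dsort M1) -> card_lt (dsort M1) (dsort M2) ->
  le C M0 M1.
Hypothesis smoothness : forall (I : Type) (lt : I -> I -> Prop) (ch : I -> structure tau U)
    (Mdelta N : structure tau U),
  well_order lt -> limit_ord lt -> incr_chain C lt ch -> continuous lt ch ->
  is_union (fun _ => True) ch Mdelta -> K C Mdelta ->
  (forall i, le C (ch i) Mdelta) ->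
  K C N -> (forall i, le C (ch i) N) ->
  card_lt (dsort Mdelta) (dsort N) -> le C Mdelta N.
Hypothesis successor_resolvable : forall M N, card_le LS (dsort M) -> le C M N ->
  is_succ_card (dsort M) (dsort N) ->
  exists (I : Type) (lt : I -> I -> Prop) (ch : I -> structure tau U),
    well_order lt /\
    card_eq I (dsort N) /\ (forall i, card_lt (seg lt i) I) /\
    incr_chain C lt ch /\ continuous lt ch /\
    (forall i, card_eq (dsort (ch i)) (dsort M)) /\
    (forall i0, least lt i0 -> ch i0 = M) /\
    is_union (fun _ => True) ch N.

Lemma model_card_ge_LS {N} : K C N -> card_le LS (dsort N).
Proof. intros h; apply card_not_lt, no_small_models, h. Qed.

Lemma model_infinite {N} : K C N -> infinite (dsort N).
Proof.
intros h; eapply card_le_trans; [|apply model_card_ge_LS, h].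
eapply card_le_trans; [apply card_le_inr|exact (proj1 LS_spec)].
Qed.

(* Continuity applied to the tail of the chain above [i], which starts at [ch i]. *)
Lemma chain_union_le {I} {lt : I -> I -> Prop} {ch : I -> structure tau U} {Mlam N} :
  well_order lt -> (forall j, exists k, lt j k) -> incr_chain C lt ch -> K C Mlam ->
  (forall j, card_lt (dsort (ch j)) (dsort Mlam)) -> is_union (fun _ => True) ch N ->
  forall i, le C (ch i) N.
Proof.
intros wo nomax [chK chle] KMlam small [uni_dom uni_sub] i.
destruct (well_order_tail I lt i wo nomax) as [wo' [lim' least']].
destruct wo as [_ [_ [tot _]]].
set (J := {j | i = j \/ lt i j}).
destruct (continuity Mlam KMlam _ _ (fun a : J => ch (proj1_sig a)) wo' lim') with (N := N)
  as [_ leN].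
- split; [intros a; apply chK|intros a b; apply chle].
- intros a; split; [apply model_card_ge_LS, chK|apply small].
- split.
  + intros x; rewrite uni_dom; split.
    * intros [j [_ hj]].
      destruct (tot i j) as [h|[h|h]].
      -- exists (exist _ j (or_intror h)); split; auto.
      -- exists (exist _ j (or_introl h)); split; auto.
      -- exists (exist _ i (or_introl eq_refl)); split; auto. exact (le_dom (chle _ _ h) _ hj).
    * intros [a [_ ha]]; exists (proj1_sig a); auto.
  + intros a _; apply uni_sub; auto.
- exact (leN _ least').
Qed.

Lemma successor_submodel {M T x} :
  K C M -> le C T M -> card_lt (dsort T) (dsort M) -> sdom M x ->
  exists B, le C T B /\ le C B M /\ is_succ_card (dsort T) (dsort B) /\ sdom B x.
Proof.
intros KM TM TltM xM.
assert (iT := model_infinite (le_K_l TM)).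
destruct (succ_card_exists _ _ iT TltM) as [P succP].
set (Pt := {d : dsort M | P d}).
set (Pm := fun y => exists h : sdom M y, P (exist _ y h)).
set (A := fun y => Pm y \/ (sdom T y \/ y = x)).
assert (AM : forall y, A y -> sdom M y).
{ intros y [[h _]|[h| ->]]; auto. exact (le_dom TM _ h). }
destruct (proj1 (proj2 LS_spec) M KM A AM) as [M1 [M1M [AM1 M1small]]].
assert (iP : infinite Pt) by (eapply infinite_le; [exact iT|exact (proj1 (proj1 succP))]).
assert (PM1 : card_eq Pt (dsort M1)).
{ apply card_le_antisym.
  - eapply card_le_trans; [apply card_eq_le, card_eq_sig_sig|].
    apply card_le_sig_sub; intros y hy; apply AM1; left; exact hy.
  - eapply card_le_trans; [exact M1small|].
    apply card_le_sum_infinite; [exact iP| |].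
    + eapply card_le_trans; [apply card_le_union|].
      apply card_le_sum_infinite; [exact iP|apply card_eq_ge, card_eq_sig_sig|].
      eapply card_le_trans; [apply card_le_union|].
      apply card_le_sum_infinite; [exact iP|exact (proj1 (proj1 succP))|].
      eapply card_le_trans; [apply card_le_singleton|apply infinite_unit_le, iP].
    + eapply card_le_trans; [exact (model_card_ge_LS (le_K_l TM))|exact (proj1 (proj1 succP))]. }
assert (succM1 := is_succ_card_eq succP PM1).
destruct (classic (card_lt (dsort M1) (dsort M))) as [M1ltM|M1M'].
- exists M1; split;
    [|split; [exact M1M|split; [exact succM1|apply AM1; right; right; reflexivity]]].
  apply (coherence _ _ _ (le_K_l TM) (le_K_l M1M) KM TM M1M); [|exact (proj1 succM1)|exact M1ltM].
  intros y hy; apply AM1; right; left; exact hy.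
- exists M; split; [exact TM|split; [apply le_refl, KM|split; [|exact xM]]].
  apply (is_succ_card_eq succM1), card_le_antisym; [|apply card_not_lt, M1M'].
  apply card_le_sig_sub, (le_dom M1M).
Qed.

Section Resolution.
Local Set Implicit Arguments.
Local Unset Strict Implicit.
Variables (M M0 : structure tau U).
Hypothesis KM : K C M.
Hypothesis M0M : le C M0 M.
Hypothesis M0ltM : card_lt (dsort M0) (dsort M).
Variable W : dsort M -> dsort M -> Prop.
Hypothesis W_wo : well_order W.
Hypothesis W_initial : forall z, card_lt (seg W z) (dsort M).

Definition least_missing (P : structure tau U) (x : U) :=
  sdom M x /\ ~ sdom P x /\
  forall (y : dsort M) (hx : sdom M x), ~ sdom P (proj1_sig y) -> ~ W y (exist _ x hx).

Lemma least_missing_exists P :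
  (forall x, sdom P x -> sdom M x) -> ~ same_universe P M -> exists x, least_missing P x.
Proof.
intros PM n. destruct (exists_new_element PM n) as [x [xM xP]].
destruct (well_founded_min W (fun z : dsort M => ~ sdom P (proj1_sig z))
           (proj2 (proj2 (proj2 W_wo))))
  as [z [zP zmin]]; [exists (exist _ x xM); auto|].
exists (proj1_sig z); split; [exact (proj2_sig z)|split; auto].
intros y hz hy; replace (exist (sdom M) (proj1_sig z) hz) with z by (apply sig_eq; reflexivity).
apply zmin; auto.
Qed.

Record resolution (R : structure tau U -> Prop) : Prop := {
  res_base : R M0;
  res_bounds : forall N, R N -> le C M0 N /\ le C N M /\ card_lt (dsort N) (dsort M);
  res_comparable : forall N N', R N -> R N' -> le C N N' \/ le C N' N;
  res_extensional : forall N N', R N -> R N' -> same_universe N N' -> N = N';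
  res_min : forall Q : structure tau U -> Prop, (exists N, R N /\ Q N) ->
    exists N, R N /\ Q N /\ forall N', R N' -> Q N' -> ~ lt_K C N' N;
  res_continuous : forall N, R N -> (exists N', R N' /\ lt_K C N' N) ->
    (forall N', R N' -> lt_K C N' N -> exists N'', R N'' /\ lt_K C N' N'' /\ lt_K C N'' N) ->
    forall x, sdom N x -> exists N', R N' /\ lt_K C N' N /\ sdom N' x;
  res_card : forall N, R N -> card_eq (dsort N) (dsort M0 + {N' | R N' /\ lt_K C N' N});
  res_successor : forall N P, R N -> R P -> lt_K C P N ->
    (forall N', R N' -> lt_K C P N' -> lt_K C N' N -> False) ->
    exists x, sdom N x /\ least_missing P x }.

Definition end_extension (R R' : structure tau U -> Prop) :=
  (forall N, R N -> R' N) /\ (forall N N', R N -> R' N' -> ~ R N' -> lt_K C N N').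

Lemma M0_model : K C M0.
Proof. exact (le_K_l M0M). Qed.

Lemma resolution_model R N : resolution R -> R N -> K C N.
Proof. intros Rres h; exact (le_K_l (proj1 (proj2 (res_bounds Rres h)))). Qed.

Lemma resolution_trichotomy R : resolution R ->
  forall N N', R N -> R N' -> lt_K C N N' \/ N = N' \/ lt_K C N' N.
Proof.
intros Rres N N' h h'. destruct (classic (same_universe N N')) as [s|s].
- right; left; apply (res_extensional Rres); auto.
- destruct (res_comparable Rres h h') as [l|l]; [left|right; right]; split; auto.
  intros s'; apply s; intros x; rewrite (s' x); tauto.
Qed.

Lemma resolution_base : resolution (fun N => N = M0).
Proof.
split.
- reflexivity.
- intros N ->; split; [apply le_refl, M0_model|split; auto].
- intros N N' -> ->; left; apply le_refl, M0_model.
- intros N N' -> -> _; reflexivity.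
- intros Q [N [-> q]]; exists M0; split; auto; split; auto.
  intros N' -> _; apply ltK_irrefl.
- intros N -> [N' [-> h]]; exfalso; apply (ltK_irrefl _ h).
- intros N ->. apply card_eq_sum_empty. intros [N' [-> h]]; apply (ltK_irrefl _ h).
- intros N P -> -> h; exfalso; apply (ltK_irrefl _ h).
Qed.

Lemma resolution_base_end_extension R : resolution R -> end_extension (fun N => N = M0) R.
Proof.
intros Rres; split.
- intros N ->; apply (res_base Rres).
- intros N N' -> h n. split; [apply (res_bounds Rres h)|].
  intros s. apply n. apply (res_extensional Rres h (res_base Rres)). intros x; rewrite (s x); tauto.
Qed.

Lemma end_extension_refl R : end_extension R R.
Proof. split; auto. intros N N' _ h n; contradiction. Qed.

Lemma end_extension_trans R1 R2 R3 :
  end_extension R1 R2 -> end_extension R2 R3 -> end_extension R1 R3.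
Proof.
intros [s1 n1] [s2 n2]; split; auto.
intros N N' h h' n. destruct (classic (R2 N')) as [hb|hb]; eauto.
Qed.

Section ChainUnion.
Variable F : (structure tau U -> Prop) -> Prop.
Hypothesis F_res : forall R, F R -> resolution R.
Hypothesis F_chain : forall R R', F R -> F R' -> end_extension R R' \/ end_extension R' R.
Hypothesis F_nonempty : exists R, F R.
Let union N := exists R, F R /\ R N.

Lemma union_downward_closed R N N' : F R -> R N -> union N' -> le C N' N -> R N'.
Proof.
intros FR h [R' [FR' h']] l. destruct (classic (R N')) as [y|n]; auto.
destruct (F_chain FR FR') as [[s e]|[s e]]; auto.
exfalso; apply (ltK_not_ge (e _ _ h h' n) l).
Qed.

Lemma union_common N N' : union N -> union N' -> exists R, F R /\ R N /\ R N'.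
Proof.
intros [R [FR h]] [R' [FR' h']]. destruct (F_chain FR FR') as [[s _]|[s _]].
- exists R'; eauto.
- exists R; eauto.
Qed.

Lemma resolution_chain_union : resolution union.
Proof.
split.
- destruct F_nonempty as [R FR]; exists R; split; auto; apply (res_base (F_res FR)).
- intros N [R [FR h]]; apply (res_bounds (F_res FR) h).
- intros N N' h h'; destruct (union_common h h') as [R [FR [k k']]].
  apply (res_comparable (F_res FR) k k').
- intros N N' h h'; destruct (union_common h h') as [R [FR [k k']]].
  apply (res_extensional (F_res FR) k k').
- intros Q [N [[R [FR h]] q]].
  destruct (res_min (F_res FR) (Q := Q)) as [N1 [h1 [q1 m1]]]; [eauto|].
  exists N1; split; [exists R; auto|split; auto].
  intros N' h' q' l. apply (m1 N'); auto. apply (union_downward_closed FR h1 h'); apply l.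
- intros N [R [FR h]] [N' [h' l']] between x hx.
  destruct (res_continuous (F_res FR) h) with (x := x) as [N2 [k2 [l2 x2]]]; auto.
  + exists N'; split; auto. apply (union_downward_closed FR h h'); apply l'.
  + intros N1 k1 l1. destruct (between N1) as [N3 [h3 [l3 l3']]]; [exists R; auto|auto|].
    exists N3; split; auto. apply (union_downward_closed FR h h3); apply l3'.
  + exists N2; split; [exists R; auto|auto].
- intros N [R [FR h]]. eapply card_eq_trans; [apply (res_card (F_res FR) h)|].
  apply card_eq_sum_r, card_eq_sig_ext. intros N'; split.
  + intros [k l]; split; auto; exists R; auto.
  + intros [k l]; split; auto. apply (union_downward_closed FR h k); apply l.
- intros N P [R [FR h]] hP l hn.
  assert (RP : R P) by (apply (union_downward_closed FR h hP); apply l).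
  apply (res_successor (F_res FR) h RP l). intros N' k l1 l2; apply (hn N'); auto; exists R; auto.
Qed.

Lemma chain_union_end_extension R : F R -> end_extension R union.
Proof.
intros FR; split; [intros N h; exists R; auto|].
intros N N' h [R' [FR' h']] n. destruct (F_chain FR FR') as [[s e]|[s e]]; auto.
exfalso; apply n, s, h'.
Qed.

End ChainUnion.

Lemma add_top_end_extension R Z :
  (forall N, R N -> lt_K C N Z) -> end_extension R (fun N => R N \/ N = Z).
Proof.
intros RZ; split; [intros N h; left; auto|].
intros N N' h [h'| ->] n; [contradiction|apply RZ, h].
Qed.

Lemma add_top_min R Z : resolution R -> (forall N, R N -> lt_K C N Z) ->
  forall Q : structure tau U -> Prop, (exists N, (R N \/ N = Z) /\ Q N) ->
  exists N, (R N \/ N = Z) /\ Q N /\ forall N', (R N' \/ N' = Z) -> Q N' -> ~ lt_K C N' N.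
Proof.
intros Rres RZ Q hQ. destruct (classic (exists N, R N /\ Q N)) as [e|e].
- destruct (res_min Rres e) as [N1 [h1 [q1 m1]]]. exists N1; split; [left; auto|split; auto].
  intros N' [h'| ->] q' l; [apply (m1 N' h' q' l)|apply (ltK_not_ge l), RZ, h1].
- exists Z. destruct hQ as [N [[h| ->] q]]; [exfalso; apply e; eauto|].
  split; [right; auto|split; auto].
  intros N' [h'| ->] q' l; [apply e; eauto|apply (ltK_irrefl _ l)].
Qed.

Lemma add_top_continuous R Z : resolution R -> (forall N, R N -> lt_K C N Z) ->
  ((forall N', R N' -> exists N'', R N'' /\ lt_K C N' N'') ->
     forall x, sdom Z x -> exists N', R N' /\ sdom N' x) ->
  forall N, (R N \/ N = Z) -> (exists N', (R N' \/ N' = Z) /\ lt_K C N' N) ->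
    (forall N', (R N' \/ N' = Z) -> lt_K C N' N ->
       exists N'', (R N'' \/ N'' = Z) /\ lt_K C N' N'' /\ lt_K C N'' N) ->
    forall x, sdom N x -> exists N', (R N' \/ N' = Z) /\ lt_K C N' N /\ sdom N' x.
Proof.
intros Rres RZ Zunion N [h| ->] below between x hx.
- destruct (res_continuous Rres h) with (x := x) as [N2 [k2 [l2 x2]]]; auto.
  + destruct below as [N' [[h'| ->] l']]; [eauto|exfalso; apply (ltK_not_ge l'), RZ, h].
  + intros N1 k1 l1. destruct (between N1) as [N3 [[h3| ->] [l3 l3']]]; [left; auto|auto| |].
    * eauto.
    * exfalso; apply (ltK_not_ge l3'), RZ, h.
  + exists N2; split; [left; auto|auto].
- destruct Zunion with (x := x) as [N2 [k2 x2]]; auto.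
  + intros N' h'. destruct (between N') as [N3 [[h3| ->] [l3 l3']]]; [left; auto|apply RZ, h'| |].
    * eauto.
    * exfalso; apply (ltK_irrefl _ l3').
  + exists N2; split; [left; auto|split; auto].
Qed.

Lemma resolution_add_top R Z : resolution R ->
  (forall N, R N -> lt_K C N Z) -> le C Z M -> card_lt (dsort Z) (dsort M) ->
  ((forall N', R N' -> exists N'', R N'' /\ lt_K C N' N'') ->
     forall x, sdom Z x -> exists N', R N' /\ sdom N' x) ->
  card_eq (dsort Z) (dsort M0 + {N | R N}) ->
  (forall P, R P -> (forall N', R N' -> lt_K C P N' -> False) ->
     exists x, sdom Z x /\ least_missing P x) ->
  resolution (fun N => R N \/ N = Z) /\ end_extension R (fun N => R N \/ N = Z).
Proof.
intros Rres RZ ZM ZltM Zunion Zcard Zsucc.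
assert (Znot : forall N, R N -> lt_K C Z N -> False).
{ intros N h l. apply (ltK_not_ge l), RZ, h. }
split; [split|].
- left; apply (res_base Rres).
- intros N [h| ->]; [apply (res_bounds Rres h)|].
  split; [apply (RZ _ (res_base Rres))|split; auto].
- intros N N' [h| ->] [h'| ->].
  + apply (res_comparable Rres h h').
  + left; apply (RZ _ h).
  + right; apply (RZ _ h').
  + left; apply le_refl, (le_K_l ZM).
- intros N N' [h| ->] [h'| ->] s.
  + apply (res_extensional Rres h h' s).
  + exfalso; apply (proj2 (RZ _ h) s).
  + exfalso; apply (proj2 (RZ _ h')). intros x; rewrite (s x); tauto.
  + reflexivity.
- apply (add_top_min Rres RZ).
- apply (add_top_continuous Rres RZ Zunion).
- intros N [h| ->].
  + eapply card_eq_trans; [apply (res_card Rres h)|]. apply card_eq_sum_r, card_eq_sig_ext.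
    intros N'; split; [intros [k l]; split; auto|].
    intros [[k| ->] l]; [split; auto|exfalso; apply (Znot _ h l)].
  + eapply card_eq_trans; [apply Zcard|]. apply card_eq_sum_r, card_eq_sig_ext.
    intros N'; split; [intros k; split; [left; auto|apply RZ, k]|].
    intros [[k| ->] l]; [auto|exfalso; apply (ltK_irrefl _ l)].
- intros N P [h| ->] [hP| ->] l hn.
  + apply (res_successor Rres h hP l). intros N' k l1 l2; apply (hn N'); auto.
  + exfalso; apply (Znot _ h l).
  + apply Zsucc; auto. intros N' k l1. apply (hn N'); auto.
  + exfalso; apply (ltK_irrefl _ l).
- apply (add_top_end_extension RZ).
Qed.

Lemma resolution_next_element R N : resolution R -> R N -> (exists N', R N' /\ lt_K C N N') ->
  exists e, least_missing N e /\ forall N'', R N'' -> lt_K C N N'' -> sdom N'' e.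
Proof.
intros Rres h above.
destruct (res_min Rres (Q := fun N' => lt_K C N N')) as [N1 [h1 [l1 m1]]].
{ destruct above as [N' [h' l']]; eauto. }
destruct (res_successor Rres h1 h l1) as [e [he we]].
{ intros N' k la lb. apply (m1 N' k la lb). }
exists e; split; auto.
intros N'' k l. destruct (resolution_trichotomy Rres h1 k) as [l'|[<-|l']].
- apply (le_dom (ltK_le l')), he.
- exact he.
- exfalso; apply (m1 _ k l l').
Qed.

Definition res_lt (R : structure tau U -> Prop) (a b : {N | R N}) :=
  lt_K C (proj1_sig a) (proj1_sig b).

Lemma resolution_well_order R : resolution R -> well_order (res_lt (R := R)).
Proof.
intros Rres; split; [|split; [|split]].
- intros a; apply ltK_irrefl.
- intros a b c; apply ltK_trans.
- intros [a ha] [b hb]; unfold res_lt; simpl.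
  destruct (resolution_trichotomy Rres ha hb) as [l|[e|l]]; auto. right; left; apply sig_eq; auto.
- intros a. apply NNPP; intros na.
  destruct (res_min Rres (Q := fun N => exists p : R N, ~ Acc (res_lt (R := R)) (exist _ N p)))
    as [N1 [h1 [[p1 q1] m1]]].
  { exists (proj1_sig a); split; [exact (proj2_sig a)|exists (proj2_sig a)]. destruct a; exact na. }
  apply q1. constructor. intros y ly. apply NNPP; intros ny.
  apply (m1 (proj1_sig y) (proj2_sig y)); [|exact ly].
  exists (proj2_sig y). destruct y; exact ny.
Qed.

Lemma resolution_continuous R : resolution R -> continuous (res_lt (R := R)) (fun a => proj1_sig a).
Proof.
intros Rres [N h] [[[N1 h1] l1] between]. unfold res_lt in *; simpl in *. split.
- intros x; split.
  + intros hx. destruct (res_continuous Rres h) with (x := x) as [N2 [h2 [l2 x2]]]; auto.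
    * exists N1; auto.
    * intros N' h' l'. destruct (between (exist _ N' h') l') as [[N'' h''] [k1 k2]].
      exists N''; auto.
    * exists (exist _ N2 h2); auto.
  + intros [[N2 h2] [l2 x2]]. apply (le_dom (ltK_le l2)), x2.
- intros [N2 h2] l2. apply (le_sub (ltK_le l2)).
Qed.

Definition union_model (R : structure tau U -> Prop) : structure tau U :=
  {| sdom := fun x => exists N, R N /\ sdom N x; sfun := sfun M; srel := srel M |}.

Lemma union_model_is_union R : resolution R ->
  is_union (fun _ => True) (fun a : {N | R N} => proj1_sig a) (union_model R).
Proof.
intros Rres; split.
- intros x; simpl; split.
  + intros [N [h hx]]; exists (exist _ N h); auto.
  + intros [[N h] [_ hx]]; exists N; auto.
- intros [N h] _; simpl. destruct (le_sub (proj1 (proj2 (res_bounds Rres h)))) as [s1 [s2 s3]].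
  split; [intros x hx; exists N; auto|split; auto].
Qed.

Lemma union_model_sub R : resolution R -> forall x, sdom (union_model R) x -> sdom M x.
Proof. intros Rres x [N [h hx]]. apply (le_dom (proj1 (proj2 (res_bounds Rres h))) _ hx). Qed.

Section Unbounded.
Variable R : structure tau U -> Prop.
Hypothesis Rres : resolution R.
Hypothesis R_unbounded : forall N, R N -> exists N', R N' /\ lt_K C N N'.

Lemma next_element_exists (n : {N | R N}) :
  exists e, least_missing (proj1_sig n) e /\ sdom (union_model R) e /\
    forall N'', R N'' -> lt_K C (proj1_sig n) N'' -> sdom N'' e.
Proof.
destruct n as [N h]; simpl.
destruct (resolution_next_element Rres h (R_unbounded h)) as [e [w p]].
exists e; split; auto; split; auto.
destruct (R_unbounded h) as [N' [h' l']]. exists N'; split; auto.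
Qed.

Definition next_element n :=
  proj1_sig (constructive_indefinite_description _ (next_element_exists n)).

Lemma next_element_spec n :
  least_missing (proj1_sig n) (next_element n) /\ sdom (union_model R) (next_element n) /\
    forall N'', R N'' -> lt_K C (proj1_sig n) N'' -> sdom N'' (next_element n).
Proof. exact (proj2_sig (constructive_indefinite_description _ (next_element_exists n))). Qed.

Lemma next_element_inj n n' : next_element n = next_element n' -> n = n'.
Proof.
intros E. destruct (next_element_spec n) as [[_ [nn _]] [_ pn]].
destruct (next_element_spec n') as [[_ [nn' _]] [_ pn']]. rewrite <- E in nn', pn'.
apply sig_eq. destruct (resolution_trichotomy Rres (proj2_sig n) (proj2_sig n')) as [l|[e|l]]; auto.
- exfalso; apply nn', pn; [exact (proj2_sig n')|exact l].
- exfalso; apply nn, pn'; [exact (proj2_sig n)|exact l].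
Qed.

Lemma union_model_card : card_eq (dsort (union_model R)) (dsort M0 + {N | R N}).
Proof.
assert (iM0 : infinite (dsort M0)) by exact (model_infinite M0_model).
assert (M0U : forall x, sdom M0 x -> sdom (union_model R) x)
  by (intros x hx; exists M0; split; auto; apply (res_base Rres)).
apply card_le_antisym.
- assert (memb : forall x : dsort (union_model R),
            exists n : {N | R N}, sdom (proj1_sig n) (proj1_sig x))
    by (intros [x [N [h hx]]]; exists (exist _ N h); auto).
  set (memb_of := fun x => proj1_sig (constructive_indefinite_description _ (memb x))).
  assert (memb_spec : forall x, sdom (proj1_sig (memb_of x)) (proj1_sig x))
    by (intros x; exact (proj2_sig (constructive_indefinite_description _ (memb x)))).
  apply (@card_le_trans _ {n : {N | R N} & dsort (proj1_sig n)}).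
  { exists (fun x => existT _ (memb_of x) (exist _ (proj1_sig x) (memb_spec x))).
    intros x y E.
    apply (f_equal (fun p : {n : {N | R N} & dsort (proj1_sig n)} => proj1_sig (projT2 p))) in E.
    apply sig_eq, E. }
  eapply card_le_trans; [apply (card_le_sigT _ _ (dsort M0 + {N | R N}))|].
  + intros [N h]; simpl. eapply card_le_trans; [apply card_eq_le, (res_card Rres h)|].
    apply card_le_sum; [apply card_le_refl|].
    exists (fun p : {N' | R N' /\ lt_K C N' N} => exist R (proj1_sig p) (proj1 (proj2_sig p))).
    intros a b E; injection E; apply sig_eq.
  + apply card_le_prod_infinite; [eapply infinite_le; [exact iM0|apply card_le_inl]|
                                  apply card_le_inr|apply card_le_refl].
- apply card_le_sum_infinite; [eapply infinite_le; [exact iM0|apply card_le_sig_sub, M0U]| |].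
  + apply card_le_sig_sub, M0U.
  + exists (fun n => exist _ (next_element n) (proj1 (proj2 (next_element_spec n)))).
    intros n n' E; injection E; apply next_element_inj.
Qed.

(* Each next element lies [W]-below the least element missing from the union. *)
Lemma union_model_card_lt :
  ~ same_universe (union_model R) M -> card_lt (dsort (union_model R)) (dsort M).
Proof.
intros ns.
destruct (least_missing_exists (union_model_sub Rres) ns) as [x [xM [xU _]]].
eapply card_le_lt_trans; [apply card_eq_le, union_model_card|].
apply card_lt_sum_infinite; [exact M0ltM| |exact (model_infinite M0_model)].
eapply card_le_lt_trans; [|apply (W_initial (exist _ x xM))].
assert (below : forall n, W (exist _ (next_element n) (proj1 (proj1 (next_element_spec n))))
                            (exist _ x xM)).
{ intros n. pose proof (next_element_spec n) as [[eM [ne emin]] [eU _]].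
  destruct W_wo as [_ [_ [Wtot _]]].
  destruct (Wtot (exist _ (next_element n) (proj1 (proj1 (next_element_spec n)))) (exist _ x xM))
    as [w|[E|w]].
  - exact w.
  - exfalso. apply (f_equal (@proj1_sig _ _)) in E. simpl in E. rewrite E in eU. contradiction.
  - exfalso; apply (emin (exist _ x xM) (proj1 (proj1 (next_element_spec n)))); auto.
    intros hxn; apply xU; exists (proj1_sig n); split; [exact (proj2_sig n)|auto]. }
exists (fun n => exist (fun y => W y (exist _ x xM)) _ (below n)).
intros n n' E. apply (f_equal (fun z => proj1_sig (proj1_sig z))) in E.
apply next_element_inj, E.
Qed.

Lemma resolution_extend_limit :
  same_universe (union_model R) M \/
  exists Z, resolution (fun N => R N \/ N = Z) /\ end_extension R (fun N => R N \/ N = Z) /\ ~ R Z.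
Proof.
destruct (classic (same_universe (union_model R) M)) as [s|ns]; [left; exact s|right].
set (Z := union_model R).
assert (wo := resolution_well_order Rres).
assert (nomax : forall j : {N | R N}, exists k, res_lt j k).
{ intros [N h]. destruct (R_unbounded h) as [N' [h' l']]. exists (exist _ N' h'); auto. }
assert (chain : incr_chain C (res_lt (R := R)) (fun a => proj1_sig a)).
{ split; [intros [N h]; exact (resolution_model Rres h)|intros i j l; apply (ltK_le l)]. }
assert (below : forall j : {N | R N}, le C (proj1_sig j) Z).
{ apply (chain_union_le wo nomax chain KM); [|apply union_model_is_union, Rres].
  intros j; exact (proj2 (proj2 (res_bounds Rres (proj2_sig j)))). }
assert (ZltM : card_lt (dsort Z) (dsort M)) by exact (union_model_card_lt ns).
assert (ZM : le C Z M).
{ apply (smoothness _ _ (fun a => proj1_sig a) Z M wo); auto.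
  - split; [exact (inhabits (exist _ M0 (res_base Rres)))|exact nomax].
  - apply resolution_continuous, Rres.
  - apply union_model_is_union, Rres.
  - exact (le_K_r (below (exist _ M0 (res_base Rres)))).
  - intros j; exact (proj1 (proj2 (res_bounds Rres (proj2_sig j)))). }
assert (RZ : forall N, R N -> lt_K C N Z).
{ intros N h. split; [exact (below (exist _ N h))|].
  intros s. destruct (R_unbounded h) as [N' [h' l']].
  destruct (exists_new_element (le_dom (ltK_le l')) (proj2 l')) as [y [y1 y2]].
  apply y2, s. exists N'; auto. }
destruct (resolution_add_top Rres RZ ZM ZltM) as [Zres Zext].
- intros _ y [N [h hy]]; exists N; auto.
- apply union_model_card.
- intros P hP Pmax. destruct (R_unbounded hP) as [N' [h' l']]. exfalso; apply (Pmax N' h' l').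
- exists Z; split; auto; split; auto.
  intros hZ. destruct (R_unbounded hZ) as [N' [h' l']].
  apply (ltK_not_ge l'), (below (exist _ N' h')).
Qed.

End Unbounded.

Lemma resolution_card_top R T : resolution R -> R T -> (forall N, R N -> le C N T) ->
  card_eq (dsort T) (dsort M0 + {N | R N}).
Proof.
intros Rres RT Tmax.
set (segT := {N' | R N' /\ lt_K C N' T}).
eapply card_eq_trans; [apply (res_card Rres RT)|].
apply card_eq_sym, (@card_eq_trans _ (dsort M0 + (segT + unit))%type).
- apply card_eq_sum_r, card_le_antisym.
  + exists (fun n : {N | R N} =>
      match excluded_middle_informative (proj1_sig n = T) with
      | left _ => inr tt
      | right ne => inl (exist (fun N' => R N' /\ lt_K C N' T) (proj1_sig n)
            (conj (proj2_sig n) (conj (Tmax _ (proj2_sig n))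
               (fun s => ne (res_extensional Rres (proj2_sig n) RT s))))) end).
    intros [n hn] [n' hn']; simpl.
    destruct (excluded_middle_informative (n = T)) as [e|e];
    destruct (excluded_middle_informative (n' = T)) as [e'|e']; intros E; try discriminate.
    * apply sig_eq; simpl; congruence.
    * injection E as E. apply sig_eq; exact E.
  + exists (fun s : segT + unit => match s with
      | inl p => exist R (proj1_sig p) (proj1 (proj2_sig p))
      | inr _ => exist R T RT end).
    intros [[p [hp lp]]|[]] [[p' [hp' lp']]|[]] E; apply (f_equal (@proj1_sig _ _)) in E;
      simpl in E.
    * f_equal; apply sig_eq; exact E.
    * subst; exfalso; apply (ltK_irrefl _ lp).
    * subst; exfalso; apply (ltK_irrefl _ lp').
    * reflexivity.
- eapply card_eq_trans; [apply card_eq_sym, card_eq_sum_assoc|].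
  apply card_eq_sum_unit_infinite.
  eapply infinite_le; [exact (model_infinite M0_model)|apply card_le_inl].
Qed.

(* The new top member is a model of size [|T|] containing the least element missing from [T],
   taken from a resolution of a successor-size extension of [T] given by [successor_resolvable]. *)
Lemma resolution_extend_top R T : resolution R -> R T -> (forall N, R N -> le C N T) ->
  exists Z, resolution (fun N => R N \/ N = Z) /\ end_extension R (fun N => R N \/ N = Z) /\ ~ R Z.
Proof.
intros Rres RT Tmax.
destruct (res_bounds Rres RT) as [_ [TM TltM]].
destruct (least_missing_exists (le_dom TM) (card_lt_not_same_universe TltM)) as [x xmin].
pose proof xmin as [xM [xT _]].
destruct (successor_submodel KM TM TltM xM) as [B [TB [BM [succB xB]]]].
destruct (successor_resolvable _ _ (model_card_ge_LS (le_K_l TM)) TB succB)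
  as [I [lt [ch [wo [_ [_ [chain [_ [chsize [chbase chunion]]]]]]]]]].
destruct (proj1 (proj1 chunion x) xB) as [i [_ xi]].
set (Z := ch i).
assert (nomax := chain_unbounded_of_card wo chain chunion chsize (proj1 succB)).
assert (ZB : le C Z B).
{ apply (chain_union_le wo nomax chain (le_K_r TB)); auto.
  intros j; exact (card_le_lt_trans (card_eq_le (chsize j)) (proj1 succB)). }
destruct (well_order_min i wo) as [i0 i0least].
assert (TZ : le C T Z).
{ rewrite <- (chbase i0 i0least). destruct wo as [_ [_ [tot _]]].
  destruct (tot i0 i) as [l|[<-|l]].
  - apply (proj2 chain), l.
  - apply le_refl, (proj1 chain).
  - exfalso; apply (i0least i l). }
assert (RZ : forall N, R N -> lt_K C N Z).
{ intros N h. split; [apply (le_trans (Tmax N h) TZ)|].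
  intros s. apply xT, (le_dom (Tmax N h)), s, xi. }
destruct (resolution_add_top Rres RZ (le_trans ZB BM)) as [Zres Zext].
- eapply card_le_lt_trans; [apply card_eq_le, (chsize i)|exact TltM].
- intros unb. destruct (unb T RT) as [N'' [h'' l'']].
  exfalso; apply (ltK_not_ge l'' (Tmax _ h'')).
- eapply card_eq_trans; [apply (chsize i)|apply (resolution_card_top Rres RT Tmax)].
- intros P RP Pmax. replace P with T; [exists x; split; auto|].
  apply (res_extensional Rres RT RP). apply NNPP; intros ns.
  apply (Pmax T RT). split; auto.
  intros s; apply ns; intros y; rewrite (s y); tauto.
- exists Z; split; auto; split; auto. intros hZ; apply (ltK_irrefl _ (RZ Z hZ)).
Qed.

Lemma maximal_resolution_exists : exists R, resolution R /\
  forall Z, resolution (fun N => R N \/ N = Z) -> end_extension R (fun N => R N \/ N = Z) -> R Z.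
Proof.
destruct (@zorn {R | resolution R} (fun a b => end_extension (proj1_sig a) (proj1_sig b)))
  as [[R Rres] Rmax].
- intros a; apply end_extension_refl.
- intros a b c; apply end_extension_trans.
- intros [a ares] [b bres] [ab _] [ba _]; simpl in *.
  apply sig_eq; simpl. apply functional_extensionality; intros N.
  apply propositional_extensionality; split; auto.
- intros F Fchain.
  (* the base resolution is added so that empty chains are bounded too *)
  set (F' := fun R => R = (fun N => N = M0) \/ exists s, F s /\ proj1_sig s = R).
  assert (F'res : forall R, F' R -> resolution R).
  { intros R [->|[s [_ <-]]]; [apply resolution_base|exact (proj2_sig s)]. }
  assert (F'chain : forall R R', F' R -> F' R' -> end_extension R R' \/ end_extension R' R).
  { intros R R' [->|[s [hs <-]]] [->|[t [ht <-]]].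
    - left; apply end_extension_refl.
    - left; apply resolution_base_end_extension, (proj2_sig t).
    - right; apply resolution_base_end_extension, (proj2_sig s).
    - apply (Fchain s t hs ht). }
  assert (F'ne : exists R, F' R) by (exists (fun N => N = M0); left; reflexivity).
  exists (exist _ _ (resolution_chain_union F'res F'chain F'ne)).
  intros s hs; simpl. apply (chain_union_end_extension F'chain). right; exists s; auto.
- exists R; split; auto.
  intros Z Zres Zext. assert (E := Rmax (exist _ _ Zres) Zext).
  apply (f_equal (@proj1_sig _ _)) in E; simpl in E.
  rewrite <- E. right; reflexivity.
Qed.

Lemma resolvable_over_of_resolution R : resolution R ->
  (forall N, R N -> exists N', R N' /\ lt_K C N N') -> same_universe (union_model R) M ->
  resolvable_over C M0 M.
Proof.
intros Rres unb UM.
split; [split; [exact M0M|apply card_lt_not_same_universe, M0ltM]|].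
exists {N | R N}, (res_lt (R := R)). split; [apply resolution_well_order, Rres|split].
{ split; [exact (inhabits (exist _ M0 (res_base Rres)))|].
  intros [N h]. destruct (unb N h) as [N' [h' l']]. exists (exist _ N' h'); auto. }
exists (fun a => proj1_sig a). split; [|split; [|split; [|split; [|split; [|split; [|split]]]]]].
- intros [N h]; exact (resolution_model Rres h).
- intros i j l; exact l.
- intros [N h]; simpl. split; [exact (proj1 (proj2 (res_bounds Rres h)))|].
  apply card_lt_not_same_universe, (res_bounds Rres h).
- apply resolution_continuous, Rres.
- split.
  + intros x. rewrite <- (UM x). apply (proj1 (union_model_is_union Rres)).
  + intros [N h] _. apply (le_sub (proj1 (proj2 (res_bounds Rres h)))).
- intros [N h] least_N; simpl.
  destruct (resolution_trichotomy Rres (res_base Rres) h) as [l|[E|l]].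
  + exfalso; apply (least_N (exist _ M0 (res_base Rres)) l).
  + auto.
  + exfalso; apply (ltK_not_ge l), (proj1 (res_bounds Rres h)).
- intros [N h]; simpl. eapply card_eq_trans; [apply (res_card Rres h)|].
  apply card_eq_sum_r, card_le_antisym.
  + exists (fun p : {N' | R N' /\ lt_K C N' N} =>
       exist (fun j : {N | R N} => res_lt j (exist _ N h))
             (exist R (proj1_sig p) (proj1 (proj2_sig p)))
             (proj2 (proj2_sig p))).
    intros p p' E. apply (f_equal (fun z => proj1_sig (proj1_sig z))) in E. apply sig_eq, E.
  + exists (fun j : seg (res_lt (R := R)) (exist _ N h) =>
       exist (fun N' => R N' /\ lt_K C N' N) (proj1_sig (proj1_sig j))
             (conj (proj2_sig (proj1_sig j)) (proj2_sig j))).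
    intros j j' E. apply (f_equal (@proj1_sig _ _)) in E. simpl in E. apply sig_eq, sig_eq, E.
- eapply card_eq_trans.
  { apply (@same_universe_card_eq _ _ M (union_model R)); intros x; symmetry; apply UM. }
  apply union_model_card; auto.
Qed.

(* A maximal resolution has no top member by [resolution_extend_top] and exhausts [M] by
   [resolution_extend_limit]. *)
Theorem resolvable_over_submodel : resolvable_over C M0 M.
Proof.
destruct maximal_resolution_exists as [R [Rres Rmax]].
assert (unb : forall N, R N -> exists N', R N' /\ lt_K C N N').
{ intros N h. apply NNPP; intros top.
  destruct (resolution_extend_top Rres h) as [Z [Zres [Zext nZ]]].
  - intros N' h'. destruct (resolution_trichotomy Rres h h') as [l|[<-|l]].
    + exfalso; apply top; eauto.
    + apply le_refl, (resolution_model Rres h).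
    + apply (ltK_le l).
  - apply nZ, Rmax; auto. }
destruct (resolution_extend_limit Rres unb) as [UM|[Z [Zres [Zext nZ]]]].
- exact (resolvable_over_of_resolution Rres unb UM).
- exfalso; apply nZ, Rmax; auto.
Qed.

End Resolution.
End Resolvability.

Theorem lemma5p3 (tau : vocab) (U : Type) (C : abstract_class tau U) (LS : Type)
  (H1a : is_LS C LS)
  (H1b : forall M, K C M -> ~ card_lt (dsort M) LS)
  (H2 : forall Mlam, K C Mlam ->
     forall (I : Type) (lt : I -> I -> Prop) (ch : I -> structure tau U),
       well_order lt -> limit_ord lt -> incr_chain C lt ch ->
       (forall i, card_le LS (dsort (ch i)) /\ card_lt (dsort (ch i)) (dsort Mlam)) ->
       forall N, is_union (fun _ => True) ch N ->
         K C N /\ (forall i0, least lt i0 -> le C (ch i0) N))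
  (H3 : forall M0 M1 M2, K C M0 -> K C M1 -> K C M2 ->
     le C M0 M2 -> le C M1 M2 -> (forall x, sdom M0 x -> sdom M1 x) ->
     card_lt (dsort M0) (dsort M1) -> card_lt (dsort M1) (dsort M2) ->
     le C M0 M1)
  (H4 : forall (I : Type) (lt : I -> I -> Prop) (ch : I -> structure tau U)
          (Mdelta N : structure tau U),
     well_order lt -> limit_ord lt -> incr_chain C lt ch -> continuous lt ch ->
     is_union (fun _ => True) ch Mdelta -> K C Mdelta ->
     (forall i, le C (ch i) Mdelta) ->
     K C N -> (forall i, le C (ch i) N) ->
     card_lt (dsort Mdelta) (dsort N) -> le C Mdelta N)
  (H5 : forall M N, card_le LS (dsort M) -> le C M N ->
     is_succ_card (dsort M) (dsort N) ->
     exists (I : Type) (lt : I -> I -> Prop) (ch : I -> structure tau U),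
       well_order lt /\
       card_eq I (dsort N) /\ (forall i, card_lt (seg lt i) I) /\
       incr_chain C lt ch /\ continuous lt ch /\
       (forall i, card_eq (dsort (ch i)) (dsort M)) /\
       (forall i0, least lt i0 -> ch i0 = M) /\
       is_union (fun _ => True) ch N) :
  resolvable_class C.
Proof.
intros M KM M0 M0M M0ltM.
destruct (initial_well_order (dsort M)) as [W [W_wo W_initial]].
exact (resolvable_over_submodel H1a H1b H2 H3 H4 H5 KM M0M M0ltM W_wo W_initial).
Qed.
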